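(* Consider algorithm DIST-OPT as described in the context with all delays bounded by $\tau_{\max}$, and let $\boldsymbol\lambda(t)=(\underline\lambda(t),\bar\lambda(t))\in\mathbb R^{2N}$ be its dual iterates, with the convention $\boldsymbol\lambda(s)=0$ for $s<0$. Define $$g(t)=\begin{bmatrix}\underline v-v(p(t),q(t))\\ v(p(t),q(t))-\bar v\end{bmatrix}.$$ Then for all $t\in\mathbb N$, $$\|\nabla D(\boldsymbol\lambda(t))-g(t)\|\le L\sqrt N\sum_{\tau=t-t_0}^{t-1}\|\boldsymbol\lambda(\tau)-\boldsymbol\lambda(\tau+1)\|,$$ where $t_0=d(\tau_{\max}+1)$ and $L=2(\|R\|^2+\|X\|^2)/a_{\min}$.
   Context: Network: a radial network is a tree on nodes $\{0,1,\dots,N\}$ rooted at node $0$; $\mathcal N=\{1,\dots,N\}$. Each $i\in\mathcal N$ has a unique parent $\sigma_i\in\{0,\dots,N\}$. Each edge $(h,k)$ ($h$ the parent of $k$) has resistance $r_{hk}\ge0$ and reactance $x_{hk}\ge0$. $\mathcal P_i$ is the set of edges on the path from $0$ to $i$. Define $N\times N$ matrices $R_{ij}=2\sum_{(h,k)\in\mathcal P_i\cap\mathcal P_j}r_{hk}$ and $X_{ij}=2\sum_{(h,k)\in\mathcal P_i\cap\mathcal P_j}x_{hk}$. $\texttt{dist}(i,j)$ is the number of edges on the tree path between $i$ and $j$, and $d=\max_{i,j\in\mathcal N}\texttt{dist}(i,j)$. Voltage model: $v(p,q)=Rp+Xq+v_0\mathbf 1\in\mathbb R^N$ for a fixed $v_0\in\mathbb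 R$. $\|\cdot\|$ is the Euclidean norm on vectors and the spectral norm on matrices. Problem (P): given vectors $\underline v\le\bar v$, $\underline p\le\bar p$, $\underline q\le\bar q$ in $\mathbb R^N$ and reals $a_i^{P},a_i^{Q}>0$, $b_i^P,b_i^Q,c_i^P,c_i^Q$, minimize over $p,q\in\mathbb R^N$ the cost $C^P(p)+C^Q(q)$, where $C^P(p)=\sum_{i}(\tfrac{a_i^P}{2}p_i^2+b_i^Pp_i+c_i^P)$, $C^Q(q)=\sum_{i}(\tfrac{a_i^Q}{2}q_i^2+b_i^Qq_i+c_i^Q)$, subject to $\underline v\le v(p,q)\le\bar v$, $\underline p\le p\le\bar p$, $\underline q\le q\le\bar q$. Let $a_{\min}=\min\{a_1^P,\dots,a_N^P,a_1^Q,\dots,a_N^Q\}$. The dual function is $D(\boldsymbol\lambda)=\min_{(p,q)\in[\underline p,\bar p]\times[\underline q,\bar q]}\bigl[C^P(p)+C^Q(q)+\underline\lambda^\top(\underline v-v(p,q))+\bar\lambda^\top(v(p,q)-\bar v)\bigr]$ for $\boldsymbol\lambda=(\underline\lambda,\bar\lambda)\in\mathbb R^{2N}$; it is differentiable. Algorithm DIST-OPT. For $i\in\mathcal N$, the algorithmic parent of $i$ is $\sigma_i$ if $\sigma_i\neq0$; if $\sigma_i=0$, $i$ has no algorithmic parent. Let $\mathcal C_i=\{j\in\mathcal N:\sigma_j=i\}$. For each $j\in\mathcal N$ having an algorithmic parent and each $t\in\mathbb N$, there are delays $\tau^{\uparrow}_j(t),\tau^{\downarrow}_j(t)\in\mathbb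 Z_{\ge0}$. Write $[x]_a^b=\min(\max(x,a),b)$ and $\lceil x\rceil_+=\max(x,0)$. Initialization ($t=0$): for all $i\in\mathcal N$, $z_i^P(0)=z_i^Q(0)=\underline\lambda_i(0)=\bar\lambda_i(0)=\lambda_i(0)=0$ and $\alpha_i(0)=\beta_i^P(0)=\beta_i^Q(0)=\hat\alpha_i(0)=\hat\beta_i^P(0)=\hat\beta_i^Q(0)=0$; any message $\alpha_i(s),\beta_i^P(s),\beta_i^Q(s)$ with $s<0$ is $0$; if $i$ has no algorithmic parent then $\hat\beta_i^P(t)=\hat\beta_i^Q(t)=0$ for all $t$. For $t=0,1,2,\dots$ and every $i\in\mathcal N$: (1) $p_i(t)=\bigl[(z_i^P(t)-b_i^P)/a_i^P\bigr]_{\underline p_i}^{\bar p_i}$ and $q_i(t)=\bigl[(z_i^Q(t)-b_i^Q)/a_i^Q\bigr]_{\underline q_i}^{\bar q_i}$. (2) $v(t)=v(p(t),q(t))$; $\underline\lambda_i(t+1)=\lceil\underline\lambda_i(t)+\gamma(\underline v_i-v_i(t))\rceil_+$, $\bar\lambda_i(t+1)=\lceil\bar\lambda_i(t)+\gamma(v_i(t)-\bar v_i)\rceil_+$, $\lambda_i(t+1)=\underline\lambda_i(t+1)-\bar\lambda_i(t+1)$, with step size $\gamma>0$. (3) $\alpha_i(t+1)=\lambda_i(t+1)+\sum_{j\in\mathcal C_i}\hat\alpha_j(t)$, and for each $j\in\mathcal C_i$: $\beta_j^P(t+1)=R_{ii}\bigl(\lambda_i(t+1)+\sum_{r\in\mathcal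 C_i\setminus\{j\}}\hat\alpha_r(t)\bigr)+\hat\beta_i^P(t)$ and $\beta_j^Q(t+1)=X_{ii}\bigl(\lambda_i(t+1)+\sum_{r\in\mathcal C_i\setminus\{j\}}\hat\alpha_r(t)\bigr)+\hat\beta_i^Q(t)$. For each $j$ with an algorithmic parent: $\hat\alpha_j(t+1)=\alpha_j(t+1-\tau^{\uparrow}_j(t))$, $\hat\beta_j^P(t+1)=\beta_j^P(t+1-\tau^{\downarrow}_j(t))$, $\hat\beta_j^Q(t+1)=\beta_j^Q(t+1-\tau^{\downarrow}_j(t))$. (4) $z_i^P(t+1)=R_{ii}\bigl(\lambda_i(t+1)+\sum_{j\in\mathcal C_i}\hat\alpha_j(t+1)\bigr)+\hat\beta_i^P(t+1)$ and $z_i^Q(t+1)=X_{ii}\bigl(\lambda_i(t+1)+\sum_{j\in\mathcal C_i}\hat\alpha_j(t+1)\bigr)+\hat\beta_i^Q(t+1)$. *)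

From Stdlib Require Import Reals Lra Lia ZArith List Bool.
Import ListNotations.
Open Scope R_scope.

(* Vectors in R^N are functions nat -> R whose entries 1..N are meaningful
   (node labels of N = {1,...,N}). *)

Fixpoint sum_to (n : nat) (f : nat -> R) : R :=
  match n with
  | O => 0
  | S k => sum_to k f + f (S k)
  end.

Fixpoint sum_lt (n : nat) (f : nat -> R) : R :=
  match n with
  | O => 0
  | S k => sum_lt k f + f k
  end.

Definition in_nodes (N i : nat) : Prop := (1 <= i <= N)%nat.

Definition vnorm (N : nat) (x : nat -> R) : R := sqrt (sum_to N (fun i => x i ^ 2)).

Definition vnorm2 (N : nat) (x y : nat -> R) : R :=
  sqrt (sum_to N (fun i => x i ^ 2 + y i ^ 2)).

Definition matvec (N : nat) (A : nat -> nat -> R) (x : nat -> R) : nat -> R :=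
  fun i => sum_to N (fun j => A i j * x j).

Definition is_spectral_norm (N : nat) (A : nat -> nat -> R) (M : R) : Prop :=
  is_lub (fun y => exists x : nat -> R, vnorm N x <= 1 /\ y = vnorm N (matvec N A x)) M.

(* sigma : parent map; nodes are 0..N, root 0. *)
Definition is_radial_tree (N : nat) (sigma : nat -> nat) : Prop :=
  forall i, in_nodes N i ->
    (sigma i <= N)%nat /\ exists m, Nat.iter m sigma i = 0%nat.

(* edge (sigma k, k), identified by its child k in N, lies on the path P_i
   from 0 to i  iff  k is i or an ancestor of i (before reaching the root). *)
Definition on_path (N : nat) (sigma : nat -> nat) (k i : nat) : bool :=
  existsb (fun m => Nat.eqb (Nat.iter m sigma i) k &&
                    forallb (fun m' => negb (Nat.eqb (Nat.iter m' sigma i) 0))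
                            (seq 0 (S m)))
          (seq 0 (S N)).

(* R_ij = 2 * sum_{(h,k) in P_i cap P_j} r_hk ; r k = resistance of edge (sigma k, k) *)
Definition Rmat (N : nat) (sigma : nat -> nat) (r : nat -> R) : nat -> nat -> R :=
  fun i j => 2 * sum_to N (fun k => if on_path N sigma k i && on_path N sigma k j
                                    then r k else 0).

Definition adj (N : nat) (sigma : nat -> nat) (u v : nat) : Prop :=
  (in_nodes N u /\ sigma u = v) \/ (in_nodes N v /\ sigma v = u).

Definition is_walk (N : nat) (sigma : nat -> nat) (u v n : nat) : Prop :=
  exists w : nat -> nat, w 0%nat = u /\ w n = v /\
    forall k, (k < n)%nat -> adj N sigma (w k) (w (S k)).

Definition is_dist (N : nat) (sigma : nat -> nat) (i j n : nat) : Prop :=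
  is_walk N sigma i j n /\ forall m, is_walk N sigma i j m -> (n <= m)%nat.

Definition is_diameter (N : nat) (sigma : nat -> nat) (d : nat) : Prop :=
  (forall i j n, in_nodes N i -> in_nodes N j -> is_dist N sigma i j n -> (n <= d)%nat) /\
  (exists i j, in_nodes N i /\ in_nodes N j /\ is_dist N sigma i j d).

Definition is_amin (N : nat) (aP aQ : nat -> R) (am : R) : Prop :=
  (forall i, in_nodes N i -> am <= aP i /\ am <= aQ i) /\
  (exists i, in_nodes N i /\ (am = aP i \/ am = aQ i)).

Definition volt (N : nat) (Rm Xm : nat -> nat -> R) (v0 : R) (p q : nat -> R) : nat -> R :=
  fun i => matvec N Rm p i + matvec N Xm q i + v0.

Definition quad_cost (N : nat) (a b c : nat -> R) (p : nat -> R) : R :=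
  sum_to N (fun i => a i / 2 * p i ^ 2 + b i * p i + c i).

Definition in_box (N : nat) (lo hi x : nat -> R) : Prop :=
  forall i, in_nodes N i -> lo i <= x i <= hi i.

Definition lagrangian (N : nat) (Rm Xm : nat -> nat -> R) (v0 : R)
  (vlo vhi aP bP cP aQ bQ cQ : nat -> R) (llo lhi p q : nat -> R) : R :=
  quad_cost N aP bP cP p + quad_cost N aQ bQ cQ q
  + sum_to N (fun i => llo i * (vlo i - volt N Rm Xm v0 p q i))
  + sum_to N (fun i => lhi i * (volt N Rm Xm v0 p q i - vhi i)).

Definition is_dual_function (N : nat) (Rm Xm : nat -> nat -> R) (v0 : R)
  (vlo vhi plo phi qlo qhi aP bP cP aQ bQ cQ : nat -> R)
  (D : (nat -> R) -> (nat -> R) -> R) : Prop :=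
  forall llo lhi : nat -> R,
    (exists p q, in_box N plo phi p /\ in_box N qlo qhi q /\
        D llo lhi = lagrangian N Rm Xm v0 vlo vhi aP bP cP aQ bQ cQ llo lhi p q) /\
    (forall p q, in_box N plo phi p -> in_box N qlo qhi q ->
        D llo lhi <= lagrangian N Rm Xm v0 vlo vhi aP bP cP aQ bQ cQ llo lhi p q).

Definition is_gradient (N : nat) (F : (nat -> R) -> (nat -> R) -> R)
  (llo lhi Glo Ghi : nat -> R) : Prop :=
  forall eps, 0 < eps -> exists delta, 0 < delta /\
    forall mlo mhi : nat -> R,
      vnorm2 N (fun i => mlo i - llo i) (fun i => mhi i - lhi i) < delta ->
      Rabs (F mlo mhi - F llo lhi
            - sum_to N (fun i => Glo i * (mlo i - llo i) + Ghi i * (mhi i - lhi i)))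
      <= eps * vnorm2 N (fun i => mlo i - llo i) (fun i => mhi i - lhi i).

Definition clamp (x a b : R) : R := Rmin (Rmax x a) b.
Definition pos_part (x : R) : R := Rmax x 0.

(* message f_j(t+1-tau), with messages at negative times equal to 0 *)
Definition delayed (f : nat -> nat -> R) (t tau j : nat) : R :=
  if Nat.ltb (S t) tau then 0 else f (S t - tau)%nat j.

Definition sum_children (N : nat) (sigma : nat -> nat) (i : nat) (f : nat -> R) : R :=
  sum_to N (fun r => if Nat.eqb (sigma r) i then f r else 0).
Definition sum_children_but (N : nat) (sigma : nat -> nat) (i j : nat) (f : nat -> R) : R :=
  sum_to N (fun r => if Nat.eqb (sigma r) i && negb (Nat.eqb r j) then f r else 0).

(* All state sequences are indexed (time t) (node i). *)
Definition dist_opt_run (N : nat) (sigma : nat -> nat) (Rm Xm : nat -> nat -> R) (v0 : R)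
  (vlo vhi plo phi qlo qhi aP bP aQ bQ : nat -> R) (gamma : R)
  (tau_up tau_dn : nat -> nat -> nat)
  (p q zP zQ llo lhi lam alpha betaP betaQ alphah betaPh betaQh : nat -> nat -> R) : Prop :=
  (forall i, in_nodes N i ->
     zP 0%nat i = 0 /\ zQ 0%nat i = 0 /\ llo 0%nat i = 0 /\ lhi 0%nat i = 0 /\
     lam 0%nat i = 0 /\ alpha 0%nat i = 0 /\ betaP 0%nat i = 0 /\ betaQ 0%nat i = 0 /\
     alphah 0%nat i = 0 /\ betaPh 0%nat i = 0 /\ betaQh 0%nat i = 0) /\
  (forall i t, in_nodes N i -> sigma i = 0%nat -> betaPh t i = 0 /\ betaQh t i = 0) /\
  (forall t i, in_nodes N i ->
     p t i = clamp ((zP t i - bP i) / aP i) (plo i) (phi i) /\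
     q t i = clamp ((zQ t i - bQ i) / aQ i) (qlo i) (qhi i) /\
     llo (S t) i = pos_part (llo t i + gamma * (vlo i - volt N Rm Xm v0 (p t) (q t) i)) /\
     lhi (S t) i = pos_part (lhi t i + gamma * (volt N Rm Xm v0 (p t) (q t) i - vhi i)) /\
     lam (S t) i = llo (S t) i - lhi (S t) i /\
     alpha (S t) i = lam (S t) i + sum_children N sigma i (alphah t) /\
     (forall j, in_nodes N j -> sigma j = i ->
        betaP (S t) j = Rm i i * (lam (S t) i + sum_children_but N sigma i j (alphah t))
                        + betaPh t i /\
        betaQ (S t) j = Xm i i * (lam (S t) i + sum_children_but N sigma i j (alphah t))
                        + betaQh t i) /\
     (sigma i <> 0%nat ->
        alphah (S t) i = delayed alpha t (tau_up i t) i /\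
        betaPh (S t) i = delayed betaP t (tau_dn i t) i /\
        betaQh (S t) i = delayed betaQ t (tau_dn i t) i) /\
     zP (S t) i = Rm i i * (lam (S t) i + sum_children N sigma i (alphah (S t)))
                  + betaPh (S t) i /\
     zQ (S t) i = Xm i i * (lam (S t) i + sum_children N sigma i (alphah (S t)))
                  + betaQh (S t) i).

Definition at_time (f : nat -> nat -> R) (s : Z) : nat -> R :=
  fun i => if (s <? 0)%Z then 0 else f (Z.to_nat s) i.

From Stdlib Require Import Reals ZArith.
From Stdlib Require Import Lra Lia List Bool Classical ClassicalEpsilon Wf_nat.
Open Scope R_scope.

(** Let [(ph, qh)] be the exact minimiser of the Lagrangian at [lam(t)].  Since the
    Lagrangian is affine in the multipliers, [grad D(lam(t)) = g(ph, qh)], hence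
    [grad D - g(t) = (v(p(t),q(t)) - v(ph,qh)) * (1, -1)] and its norm is
    [sqrt 2 ||R (p(t) - ph) + X (q(t) - qh)||].  Both [p_i(t)] and [ph_i] are clamped
    affine functions, of [z_i(t)] and of [(R lam(t))_i] respectively, so everything
    reduces to bounding [|z_i(t) - (R lam(t))_i|].  The heart of the proof is that the
    messages exchanged on the tree reproduce [R lam] with a delay: by induction on time,
    the upward message of a node sums the dual variables of its subtree and the downward
    message carries [R_(sigma j) k lam_k] for [k] outside the subtree of [j], each
    [lam_k] being at most [(tau_max + 1) dist(k, j) <= t0] steps old.  The error is thus
    bounded by the variation of [lam] over the last [t0] steps, and Cauchy-Schwarz
    together with the spectral norms yields the constant [L sqrt N]. *)

Lemma sum_to_ext n f g :
  (forall i, (1 <= i <= n)%nat -> f i = g i) -> sum_to n f = sum_to n g.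
Proof.
  induction n as [|n IH]; intros H; simpl; auto.
  rewrite IH by (intros; apply H; lia). rewrite H by lia. reflexivity.
Qed.

Lemma sum_to_le n f g :
  (forall i, (1 <= i <= n)%nat -> f i <= g i) -> sum_to n f <= sum_to n g.
Proof.
  induction n as [|n IH]; intros H; simpl; [lra|].
  assert (sum_to n f <= sum_to n g) by (apply IH; intros; apply H; lia).
  assert (f (S n) <= g (S n)) by (apply H; lia). lra.
Qed.

Lemma sum_to_plus n f g : sum_to n (fun i => f i + g i) = sum_to n f + sum_to n g.
Proof. induction n; simpl; [lra|]. rewrite IHn; lra. Qed.

Lemma sum_to_minus n f g : sum_to n (fun i => f i - g i) = sum_to n f - sum_to n g.
Proof. induction n; simpl; [lra|]. rewrite IHn; lra. Qed.

Lemma sum_to_scal n c f : sum_to n (fun i => c * f i) = c * sum_to n f.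
Proof. induction n; simpl; [lra|]. rewrite IHn; lra. Qed.

Lemma sum_to_const n c : sum_to n (fun _ => c) = INR n * c.
Proof. induction n; cbn [sum_to]; [simpl; ring|]. rewrite IHn, S_INR. ring. Qed.

Lemma sum_to_zero n f : (forall i, (1 <= i <= n)%nat -> f i = 0) -> sum_to n f = 0.
Proof.
  intros H. rewrite (sum_to_ext n f (fun _ => 0)) by auto.
  rewrite sum_to_const. ring.
Qed.

Lemma sum_to_nonneg n f : (forall i, (1 <= i <= n)%nat -> 0 <= f i) -> 0 <= sum_to n f.
Proof. intros H. rewrite <- (sum_to_zero n (fun _ => 0)) by auto. apply sum_to_le; auto. Qed.

Lemma sum_to_abs n f : Rabs (sum_to n f) <= sum_to n (fun i => Rabs (f i)).
Proof.
  induction n; simpl; [rewrite Rabs_R0; lra|].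
  eapply Rle_trans; [apply Rabs_triang|lra].
Qed.

Lemma sum_to_ge_term n f i :
  (forall k, (1 <= k <= n)%nat -> 0 <= f k) -> (1 <= i <= n)%nat -> f i <= sum_to n f.
Proof.
  induction n as [|n IH]; intros H Hi; [lia|]. cbn [sum_to].
  destruct (Nat.eq_dec i (S n)) as [->|Hne].
  - assert (0 <= sum_to n f) by (apply sum_to_nonneg; intros; apply H; lia). lra.
  - assert (f i <= sum_to n f) by (apply IH; [intros; apply H|]; lia).
    assert (0 <= f (S n)) by (apply H; lia). lra.
Qed.

Lemma sum_to_delta n i g : (1 <= i <= n)%nat ->
  sum_to n (fun k => if Nat.eqb k i then g k else 0) = g i.
Proof.
  induction n as [|n IH]; cbn [sum_to]; intros H; [lia|].
  destruct (Nat.eq_dec i (S n)) as [->|Hne].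
  - rewrite Nat.eqb_refl, sum_to_zero; [lra|].
    intros k Hk. destruct (Nat.eqb_spec k (S n)); [lia|auto].
  - destruct (Nat.eqb_spec (S n) i); [lia|]. rewrite IH by lia. lra.
Qed.

Lemma sum_to_update n i (F : nat -> R -> R) (p : nat -> R) y : (1 <= i <= n)%nat ->
  sum_to n (fun k => F k (if Nat.eqb k i then y else p k)) =
  sum_to n (fun k => F k (p k)) + (F i y - F i (p i)).
Proof.
  intros H.
  rewrite <- (sum_to_delta n i (fun k => F k y - F k (p k))) by auto.
  rewrite <- sum_to_plus. apply sum_to_ext. intros k _.
  destruct (Nat.eqb_spec k i); subst; lra.
Qed.

Lemma sum_lt_ext n f g : (forall i, (i < n)%nat -> f i = g i) -> sum_lt n f = sum_lt n g.
Proof.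
  induction n as [|n IH]; intros H; simpl; auto.
  rewrite IH by (intros; apply H; lia). rewrite H by lia. reflexivity.
Qed.

Lemma sum_lt_le n f g : (forall i, (i < n)%nat -> f i <= g i) -> sum_lt n f <= sum_lt n g.
Proof.
  induction n as [|n IH]; intros H; simpl; [lra|].
  assert (sum_lt n f <= sum_lt n g) by (apply IH; intros; apply H; lia).
  assert (f n <= g n) by (apply H; lia). lra.
Qed.

Lemma sum_lt_plus n f g : sum_lt n (fun i => f i + g i) = sum_lt n f + sum_lt n g.
Proof. induction n; simpl; [lra|]. rewrite IHn; lra. Qed.

Lemma sum_lt_scal n c f : sum_lt n (fun i => c * f i) = c * sum_lt n f.
Proof. induction n; simpl; [lra|]. rewrite IHn; lra. Qed.

Lemma sum_lt_nonneg n f : (forall i, (i < n)%nat -> 0 <= f i) -> 0 <= sum_lt n f.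
Proof.
  intros H. replace 0 with (sum_lt n (fun _ => 0)).
  - apply sum_lt_le; auto.
  - induction n; simpl; [lra|]. rewrite IHn by (intros; apply H; lia). lra.
Qed.

Lemma sum_lt_mono n m f : (n <= m)%nat -> (forall i, 0 <= f i) -> sum_lt n f <= sum_lt m f.
Proof. intros H Hf. induction H; [lra|]. simpl. specialize (Hf m). lra. Qed.

Lemma sum_lt_split a b f :
  sum_lt (a + b) f = sum_lt a f + sum_lt b (fun m => f (a + m)%nat).
Proof.
  induction b; simpl; [rewrite Nat.add_0_r; lra|].
  rewrite Nat.add_succ_r; simpl. rewrite IHb; lra.
Qed.

Lemma sum_exchange n m (F : nat -> nat -> R) :
  sum_to n (fun k => sum_lt m (fun j => F k j)) = sum_lt m (fun j => sum_to n (fun k => F k j)).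
Proof.
  induction n; simpl.
  - induction m; simpl; auto. rewrite <- IHm; lra.
  - rewrite IHn, <- sum_lt_plus. reflexivity.
Qed.

Lemma sumsq_nonneg n f : 0 <= sum_to n (fun i => f i ^ 2).
Proof. apply sum_to_nonneg; intros; nra. Qed.

Lemma sq_le x y : 0 <= y -> x ^ 2 <= y ^ 2 -> x <= y.
Proof. intros Hy H. destruct (Rle_dec x y); auto. nra. Qed.

Lemma cauchy_schwarz_sq n a b :
  (sum_to n (fun i => a i * b i)) ^ 2 <=
  sum_to n (fun i => a i ^ 2) * sum_to n (fun i => b i ^ 2).
Proof.
  induction n; cbn [sum_to]; [lra|].
  set (C := sum_to n (fun i => a i * b i)) in *.
  set (A := sum_to n (fun i => a i ^ 2)) in *.
  set (B := sum_to n (fun i => b i ^ 2)) in *.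
  assert (HA : 0 <= A) by apply sumsq_nonneg.
  assert (HB : 0 <= B) by apply sumsq_nonneg.
  set (u := a (S n)); set (v := b (S n)).
  (* the cross term is controlled by AM-GM: 2uvC <= u^2 B + v^2 A *)
  assert (Hcross : 2 * u * v * C <= u ^ 2 * B + v ^ 2 * A).
  { apply sq_le; [nra|].
    assert (4 * (u * v) ^ 2 * C ^ 2 <= 4 * (u * v) ^ 2 * (A * B))
      by (apply Rmult_le_compat_l; nra).
    assert (0 <= (u ^ 2 * B - v ^ 2 * A) ^ 2) by apply pow2_ge_0.
    replace ((2 * u * v * C) ^ 2) with (4 * (u * v) ^ 2 * C ^ 2) by ring.
    replace ((u ^ 2 * B + v ^ 2 * A) ^ 2)
      with (4 * (u * v) ^ 2 * (A * B) + (u ^ 2 * B - v ^ 2 * A) ^ 2) by ring.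
    lra. }
  replace ((C + u * v) ^ 2) with (C ^ 2 + 2 * u * v * C + u ^ 2 * v ^ 2) by ring.
  replace ((A + u ^ 2) * (B + v ^ 2))
    with (A * B + (u ^ 2 * B + v ^ 2 * A) + u ^ 2 * v ^ 2) by ring.
  lra.
Qed.

Lemma cauchy_schwarz n a b :
  sum_to n (fun i => Rabs (a i) * Rabs (b i)) <=
  sqrt (sum_to n (fun i => a i ^ 2)) * sqrt (sum_to n (fun i => b i ^ 2)).
Proof.
  assert (Habs : forall c : nat -> R,
            sum_to n (fun i => Rabs (c i) ^ 2) = sum_to n (fun i => c i ^ 2)).
  { intros c. apply sum_to_ext. intros.
    rewrite <- !Rsqr_pow2, <- Rsqr_abs. reflexivity. }
  assert (H := cauchy_schwarz_sq n (fun i => Rabs (a i)) (fun i => Rabs (b i))).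
  cbv beta in H. rewrite !Habs in H.
  assert (HS : 0 <= sum_to n (fun i => Rabs (a i) * Rabs (b i)))
    by (apply sum_to_nonneg; intros; apply Rmult_le_pos; apply Rabs_pos).
  rewrite <- sqrt_mult_alt by apply sumsq_nonneg.
  rewrite <- (sqrt_pow2 _ HS). apply sqrt_le_1_alt. exact H.
Qed.

Lemma vnorm_triangle N u w : vnorm N (fun i => u i + w i) <= vnorm N u + vnorm N w.
Proof.
  unfold vnorm.
  assert (HU := sumsq_nonneg N u). assert (HW := sumsq_nonneg N w).
  assert (CS := cauchy_schwarz N u w).
  assert (Hcross : sum_to N (fun i => u i * w i) <= sum_to N (fun i => Rabs (u i) * Rabs (w i))).
  { apply sum_to_le; intros. rewrite <- Rabs_mult. apply Rle_abs. }
  assert (E : sum_to N (fun i => (u i + w i) ^ 2) =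
              sum_to N (fun i => u i ^ 2) + sum_to N (fun i => w i ^ 2)
              + 2 * sum_to N (fun i => u i * w i)).
  { rewrite <- sum_to_scal, <- !sum_to_plus. apply sum_to_ext; intros; ring. }
  assert (P := sqrt_sqrt _ HU). assert (Q := sqrt_sqrt _ HW).
  assert (Hpos : 0 <= sqrt (sum_to N (fun i => u i ^ 2)) + sqrt (sum_to N (fun i => w i ^ 2)))
    by (apply Rplus_le_le_0_compat; apply sqrt_pos).
  rewrite <- (sqrt_pow2 _ Hpos). apply sqrt_le_1_alt. rewrite E. nra.
Qed.

Lemma vnorm_scale N c x : vnorm N (fun k => c * x k) = Rabs c * vnorm N x.
Proof.
  unfold vnorm. rewrite (sum_to_ext N _ (fun k => c ^ 2 * x k ^ 2)) by (intros; ring).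
  rewrite sum_to_scal, sqrt_mult_alt by apply pow2_ge_0.
  rewrite <- Rsqr_pow2, sqrt_Rsqr_abs. reflexivity.
Qed.

Lemma vnorm_le_const N x M :
  (forall i, in_nodes N i -> Rabs (x i) <= M) -> vnorm N x <= sqrt (INR N) * M.
Proof.
  intros H. destruct N as [|N].
  - unfold vnorm. simpl. rewrite sqrt_0. lra.
  - assert (HM : 0 <= M)
      by (eapply Rle_trans; [apply Rabs_pos| apply (H 1%nat); unfold in_nodes; lia]).
    unfold vnorm. rewrite <- (sqrt_pow2 M HM), <- sqrt_mult_alt by apply pos_INR.
    apply sqrt_le_1_alt. rewrite <- sum_to_const. apply sum_to_le. intros i Hi.
    assert (A := H i Hi). rewrite <- (Rsqr_pow2 (x i)), Rsqr_abs, Rsqr_pow2.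
    assert (0 <= Rabs (x i)) by apply Rabs_pos. nra.
Qed.

Lemma vnorm_diff_le_vnorm2 N (a b : nat -> R) :
  sqrt (sum_to N (fun k => (a k - b k) ^ 2)) <= sqrt 2 * vnorm2 N a b.
Proof.
  unfold vnorm2. rewrite <- sqrt_mult_alt by lra. apply sqrt_le_1_alt.
  rewrite <- sum_to_scal. apply sum_to_le.
  intros. assert (0 <= (a i + b i) ^ 2) by apply pow2_ge_0. nra.
Qed.

Lemma matvec_zero N A : forall i, matvec N A (fun _ => 0) i = 0.
Proof. intros i. unfold matvec. apply sum_to_zero. intros; ring. Qed.

Lemma spectral_norm_nonneg N A M : is_spectral_norm N A M -> 0 <= M.
Proof.
  intros [Hub _]. apply Hub. exists (fun _ => 0). unfold vnorm.
  rewrite (sum_to_zero N (fun i => 0 ^ 2)) by (intros; ring).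
  rewrite (sum_to_zero N (fun i => matvec N A (fun _ => 0) i ^ 2))
    by (intros; rewrite matvec_zero; ring).
  rewrite sqrt_0. split; lra.
Qed.

Lemma spectral_norm_bound N A M x :
  is_spectral_norm N A M -> vnorm N (matvec N A x) <= M * vnorm N x.
Proof.
  intros HM. assert (HM0 := spectral_norm_nonneg N A M HM). destruct HM as [Hub _].
  assert (Hs := sqrt_pos (sum_to N (fun i => x i ^ 2))). fold (vnorm N x) in Hs.
  destruct (Req_dec (vnorm N x) 0) as [E|E].
  -
    assert (Z : forall k, in_nodes N k -> x k = 0).
    { intros k Hk. unfold vnorm in E. apply sqrt_eq_0 in E; [|apply sumsq_nonneg].
      assert (x k ^ 2 <= sum_to N (fun i => x i ^ 2))
        by (apply (sum_to_ge_term N (fun i => x i ^ 2)); auto; intros; apply pow2_ge_0).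
      nra. }
    rewrite E. unfold vnorm.
    rewrite (sum_to_zero N (fun i => matvec N A x i ^ 2)); [rewrite sqrt_0; lra|].
    intros i _. unfold matvec. rewrite sum_to_zero; [ring|].
    intros j Hj. rewrite Z; [ring|auto].
  -
    set (s := vnorm N x) in *. assert (Hsp : 0 < s) by lra.
    assert (Hinv : Rabs (/ s) = / s)
      by (apply Rabs_right, Rle_ge, Rlt_le, Rinv_0_lt_compat; lra).
    assert (H1 : vnorm N (fun k => / s * x k) = 1)
      by (rewrite vnorm_scale, Hinv; fold s; field; lra).
    assert (H2 : vnorm N (matvec N A (fun k => / s * x k)) <= M)
      by (apply Hub; exists (fun k => / s * x k); split; [lra|auto]).
    assert (Hlin : forall i, matvec N A (fun k => / s * x k) i = / s * matvec N A x i).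
    { intros i. unfold matvec. rewrite <- sum_to_scal. apply sum_to_ext; intros; ring. }
    unfold vnorm in H2 at 1.
    rewrite (sum_to_ext N _ (fun i => (/ s * matvec N A x i) ^ 2)) in H2
      by (intros; rewrite Hlin; auto).
    change (vnorm N (fun i => / s * matvec N A x i) <= M) in H2.
    rewrite vnorm_scale, Hinv in H2.
    apply (Rmult_le_compat_l s) in H2; [|lra].
    replace (s * (/ s * vnorm N (matvec N A x))) with (vnorm N (matvec N A x)) in H2
      by (field; lra). lra.
Qed.

(** Each row of a symmetric matrix has Euclidean norm at most the spectral norm
    (apply the matrix to a basis vector). *)
Lemma row_norm_le_spectral N A M i :
  is_spectral_norm N A M -> (forall a b, A a b = A b a) -> in_nodes N i ->
  sqrt (sum_to N (fun k => A i k ^ 2)) <= M.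
Proof.
  intros [Hub _] Hsym Hi. apply Hub. exists (fun j => if Nat.eqb j i then 1 else 0). split.
  - unfold vnorm. rewrite (sum_to_ext N _ (fun j => if Nat.eqb j i then 1 else 0))
      by (intros j _; destruct (Nat.eqb j i); ring).
    rewrite (sum_to_delta N i (fun _ => 1)) by (unfold in_nodes in Hi; lia).
    rewrite sqrt_1; lra.
  - unfold vnorm. f_equal. apply sum_to_ext. intros k _. unfold matvec.
    rewrite (sum_to_ext N _ (fun j => if Nat.eqb j i then A k j else 0))
      by (intros j _; destruct (Nat.eqb j i); ring).
    rewrite (sum_to_delta N i (fun j => A k j)) by (unfold in_nodes in Hi; lia).
    rewrite Hsym. reflexivity.
Qed.

(** Ancestors in a radial tree.  [on_path N sigma j k] says that the edge
    [(sigma j, j)] lies on the path from the root to [k], i.e. [k] belongs to the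
    subtree rooted at [j]. *)

Definition ancestor_at (sigma : nat -> nat) (m k j : nat) : Prop :=
  Nat.iter m sigma k = j /\ forall m', (m' <= m)%nat -> Nat.iter m' sigma k <> 0%nat.

Lemma least_witness (P : nat -> Prop) n : P n -> exists m, P m /\ forall k, (k < m)%nat -> ~ P k.
Proof.
  induction n as [n IH] using (well_founded_induction lt_wf). intros Pn.
  destruct (classic (exists k, (k < n)%nat /\ P k)) as [[k [Hk Pk]]|H].
  - exact (IH k Hk Pk).
  - exists n. split; auto. intros k Hk Pk. apply H. eauto.
Qed.

Section RadialTree.

Variables (N : nat) (sigma : nat -> nat).
Hypothesis tree : is_radial_tree N sigma.

Lemma iter_in_nodes k m : in_nodes N k ->
  (forall m', (m' <= m)%nat -> Nat.iter m' sigma k <> 0%nat) -> in_nodes N (Nat.iter m sigma k).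
Proof.
  intros Hk. induction m as [|m IH]; intros H; simpl; auto.
  assert (Hm := IH ltac:(intros; apply H; lia)).
  destruct (tree _ Hm) as [Hs _]. assert (H2 := H (S m) ltac:(lia)). simpl in H2.
  unfold in_nodes in *. lia.
Qed.

Lemma parent_in_nodes i : in_nodes N i -> sigma i <> 0%nat -> in_nodes N (sigma i).
Proof. intros Hi H. destruct (tree i Hi). unfold in_nodes; lia. Qed.

Lemma depth_exists u : (u <= N)%nat ->
  exists M, Nat.iter M sigma u = 0%nat /\
            forall m', (m' < M)%nat -> Nat.iter m' sigma u <> 0%nat.
Proof.
  intros Hu. destruct (Nat.eq_dec u 0) as [->|Hne].
  - exists 0%nat. split; auto. intros; lia.
  - destruct (tree u ltac:(unfold in_nodes; lia)) as [_ [M HM]].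
    destruct (least_witness (fun m => Nat.iter m sigma u = 0%nat) M HM) as [m [Hm Hm']].
    exists m. split; auto.
Qed.

Lemma ancestor_no_cycle k a b : in_nodes N k -> (a < b)%nat ->
  Nat.iter a sigma k = Nat.iter b sigma k ->
  (forall m', (m' < b)%nat -> Nat.iter m' sigma k <> 0%nat) -> False.
Proof.
  intros Hk Hab E Hnz.
  (* a cycle would make the whole orbit of k stay among its first b iterates *)
  assert (C : forall m, exists j, (j < b)%nat /\ Nat.iter m sigma k = Nat.iter j sigma k).
  { intro m. induction m as [m IH] using (well_founded_induction lt_wf).
    destruct (Nat.lt_ge_cases m b). { exists m; auto. }
    replace m with (b + (m - b))%nat by lia.
    rewrite (Nat.add_comm b), Nat.iter_add, <- E, <- Nat.iter_add.
    apply IH. lia. }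
  destruct (tree k Hk) as [_ [M HM]]. destruct (C M) as [j [Hj E2]].
  apply (Hnz j Hj). congruence.
Qed.

Lemma ancestor_inj k a b : in_nodes N k ->
  Nat.iter a sigma k = Nat.iter b sigma k ->
  (forall m', (m' < a)%nat -> Nat.iter m' sigma k <> 0%nat) ->
  (forall m', (m' < b)%nat -> Nat.iter m' sigma k <> 0%nat) -> a = b.
Proof.
  intros Hk E Ha Hb. destruct (Nat.lt_total a b) as [H|[H|H]]; auto; exfalso.
  - eapply (ancestor_no_cycle k a b); eauto.
  - eapply (ancestor_no_cycle k b a); eauto.
Qed.

(** The chain of ancestors of a node consists of distinct nodes, so it has length < N. *)
Lemma ancestor_depth_lt k m : in_nodes N k ->
  (forall m', (m' <= m)%nat -> Nat.iter m' sigma k <> 0%nat) -> (m < N)%nat.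
Proof.
  intros Hk H.
  set (l := map (fun j => Nat.iter j sigma k) (seq 0 (S m))).
  assert (ND : NoDup l).
  { apply NoDup_map_NoDup_ForallPairs; [|apply seq_NoDup].
    intros a b Ha Hb E. apply in_seq in Ha, Hb.
    eapply ancestor_inj; eauto; intros; apply H; lia. }
  assert (I : incl l (seq 1 N)).
  { intros y Hy. unfold l in Hy. apply in_map_iff in Hy. destruct Hy as [j [<- Hj]].
    apply in_seq in Hj.
    assert (in_nodes N (Nat.iter j sigma k)) by (apply iter_in_nodes; auto; intros; apply H; lia).
    apply in_seq. unfold in_nodes in *; lia. }
  assert (L := NoDup_incl_length ND I). unfold l in L.
  rewrite length_map, !length_seq in L. lia.
Qed.

Lemma on_path_bounded j k :
  on_path N sigma j k = true <-> exists m, (m <= N)%nat /\ ancestor_at sigma m k j.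
Proof.
  unfold on_path, ancestor_at. rewrite existsb_exists. split.
  - intros [m [Hm E]]. apply andb_true_iff in E. destruct E as [E1 E2].
    apply Nat.eqb_eq in E1. rewrite forallb_forall in E2. apply in_seq in Hm.
    exists m. split; [lia|]. split; auto. intros m' Hm' E3.
    assert (E4 := E2 m' ltac:(apply in_seq; lia)). rewrite E3 in E4. discriminate.
  - intros [m [Hm [E1 E2]]]. exists m. split; [apply in_seq; lia|].
    apply andb_true_iff. split; [apply Nat.eqb_eq; auto|]. apply forallb_forall.
    intros m' Hm'. apply in_seq in Hm'. apply negb_true_iff, Nat.eqb_neq, E2. lia.
Qed.

Lemma on_path_ancestor j k : in_nodes N k ->
  (on_path N sigma j k = true <-> exists m, ancestor_at sigma m k j).
Proof.
  intros Hk. rewrite on_path_bounded. split.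
  - intros [m [_ H]]; eauto.
  - intros [m H]. exists m. split; auto. destruct H as [_ H].
    assert (m < N)%nat by (eapply ancestor_depth_lt; eauto). lia.
Qed.

Lemma on_path_root j : on_path N sigma j 0 = false.
Proof.
  destruct (on_path N sigma j 0) eqn:E; auto. apply on_path_bounded in E.
  destruct E as [m [_ [_ H]]]. exfalso. apply (H 0%nat); auto; lia.
Qed.

Lemma on_path_refl k : in_nodes N k -> on_path N sigma k k = true.
Proof.
  intros Hk. apply on_path_ancestor; auto. exists 0%nat. split; auto. intros m' Hm'.
  replace m' with 0%nat by lia. simpl. unfold in_nodes in Hk; lia.
Qed.

Lemma on_path_in_nodes j k : in_nodes N k -> on_path N sigma j k = true -> in_nodes N j.
Proof.
  intros Hk H. apply on_path_ancestor in H; auto. destruct H as [m [<- H]].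
  apply iter_in_nodes; auto.
Qed.

Lemma on_path_step m i : in_nodes N i ->
  (on_path N sigma m i = true <-> m = i \/ on_path N sigma m (sigma i) = true).
Proof.
  intros Hi. rewrite on_path_ancestor by auto. split.
  - intros [[|a] [E H]].
    + left. symmetry. exact E.
    + right. apply on_path_bounded. exists a. split.
      * assert (S a < N)%nat by (eapply ancestor_depth_lt; eauto). lia.
      * split; [rewrite <- E, Nat.iter_succ_r; auto|].
        intros m' Hm'. rewrite <- Nat.iter_succ_r. apply H; lia.
  - intros [->|H].
    + exists 0%nat. split; auto. intros m' Hm'. replace m' with 0%nat by lia.
      simpl. unfold in_nodes in Hi; lia.
    + apply on_path_bounded in H. destruct H as [a [_ [E H]]]. exists (S a).
      split; [rewrite Nat.iter_succ_r; auto|].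
      intros [|m'] Hm'; [simpl; unfold in_nodes in Hi; lia|].
      rewrite Nat.iter_succ_r. apply H; lia.
Qed.

Lemma on_path_up c i k : in_nodes N k -> sigma c = i -> in_nodes N i ->
  on_path N sigma c k = true -> on_path N sigma i k = true.
Proof.
  intros Hk Ei Hi H. apply on_path_ancestor in H; auto. apply on_path_ancestor; auto.
  destruct H as [a [E H]]. exists (S a). split; [simpl; congruence|].
  intros m' Hm'. destruct (Nat.eq_dec m' (S a)) as [->|]; [|apply H; lia].
  simpl. rewrite E, Ei. unfold in_nodes in Hi; lia.
Qed.

Lemma on_path_trans m i k : in_nodes N k ->
  on_path N sigma m i = true -> on_path N sigma i k = true -> on_path N sigma m k = true.
Proof.
  intros Hk H1 H2. assert (Hi := on_path_in_nodes i k Hk H2).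
  apply on_path_ancestor in H1; auto. apply on_path_ancestor in H2; auto.
  apply on_path_ancestor; auto.
  destruct H1 as [a [E1 H1]]. destruct H2 as [b [E2 H2]]. exists (a + b)%nat.
  split; [rewrite Nat.iter_add, E2; auto|].
  intros m' Hm'. destruct (Nat.le_gt_cases m' b); [apply H2; auto|].
  replace m' with ((m' - b) + b)%nat by lia. rewrite Nat.iter_add, E2. apply H1. lia.
Qed.

Lemma child_not_above c k : in_nodes N k -> sigma c = k -> on_path N sigma c k = false.
Proof.
  intros Hk E. destruct (on_path N sigma c k) eqn:H; auto. exfalso.
  apply on_path_ancestor in H; auto. destruct H as [a [Ea H]].
  assert (S a = 0)%nat; [|lia].
  eapply (ancestor_inj k); eauto; [simpl; rewrite Ea, E; auto| |]; intros; [apply H|]; lia.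
Qed.

Lemma child_unique c c' k : in_nodes N k ->
  on_path N sigma c k = true -> on_path N sigma c' k = true ->
  sigma c = sigma c' -> sigma c <> 0%nat -> c = c'.
Proof.
  intros Hk H H' E Hnz. apply on_path_ancestor in H, H'; auto.
  destruct H as [a [Ea H]]. destruct H' as [b [Eb H']].
  assert (Hab : S a = S b).
  { assert (Ha' : forall m', (m' < S a)%nat -> Nat.iter m' sigma k <> 0%nat)
      by (intros; apply H; lia).
    assert (Hb' : forall m', (m' < S b)%nat -> Nat.iter m' sigma k <> 0%nat)
      by (intros; apply H'; lia).
    apply (ancestor_inj k); auto. simpl. rewrite Ea, Eb. exact E. }
  assert (a = b) by lia. subst. reflexivity.
Qed.

Definition indicator (b : bool) : R := if b then 1 else 0.

Lemma subtree_indicator_rec i k : in_nodes N i -> in_nodes N k ->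
  indicator (on_path N sigma i k) = indicator (Nat.eqb k i) +
    sum_to N (fun c => if Nat.eqb (sigma c) i then indicator (on_path N sigma c k) else 0).
Proof.
  intros Hi Hk. destruct (Nat.eqb_spec k i) as [->|Hne].
  - (* no child of i contains i *)
    rewrite on_path_refl by auto.
    rewrite sum_to_zero; [unfold indicator; lra|].
    intros c _. destruct (Nat.eqb_spec (sigma c) i) as [E|]; auto.
    rewrite child_not_above by auto. reflexivity.
  - destruct (on_path N sigma i k) eqn:E.
    + (* exactly one child c0 of i contains k: the ancestor of k just below i *)
      apply on_path_ancestor in E as [[|a] [Ea Ha]]; auto; [simpl in Ea; congruence|].
      set (c0 := Nat.iter a sigma k).
      assert (Hc0 : on_path N sigma c0 k = true)
        by (apply on_path_ancestor; auto; exists a; split; [reflexivity|intros; apply Ha; lia]).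
      assert (Sc0 : sigma c0 = i) by (rewrite <- Ea; reflexivity).
      assert (Nc0 : in_nodes N c0) by (eapply on_path_in_nodes; eauto).
      rewrite (sum_to_ext N _ (fun c => if Nat.eqb c c0 then 1 else 0)).
      { rewrite (sum_to_delta N c0 (fun _ => 1)) by (unfold in_nodes in Nc0; lia).
        unfold indicator; lra. }
      intros c _. destruct (Nat.eqb_spec c c0) as [->|Hc].
      * rewrite Sc0, Nat.eqb_refl, Hc0. reflexivity.
      * destruct (Nat.eqb_spec (sigma c) i) as [e|]; auto.
        destruct (on_path N sigma c k) eqn:E2; auto. exfalso. apply Hc.
        apply (child_unique c c0 k); auto; [congruence|].
        rewrite e. unfold in_nodes in Hi; lia.
    + (* no child contains k, since its subtree is inside that of i *)
      rewrite sum_to_zero; [unfold indicator; lra|].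
      intros c _. destruct (Nat.eqb_spec (sigma c) i); auto.
      destruct (on_path N sigma c k) eqn:E2; auto.
      rewrite (on_path_up c i k) in E; auto. discriminate.
Qed.

(** Structure of the matrix [R]: [R_ik] only depends on the deepest common ancestor,
    so [R_ik = R_ii] for [k] in the subtree of [i] and [R_ik = R_(sigma i) k] otherwise. *)

Lemma Rmat_sym r i k : Rmat N sigma r i k = Rmat N sigma r k i.
Proof. unfold Rmat. f_equal. apply sum_to_ext. intros. rewrite andb_comm. reflexivity. Qed.

Lemma Rmat_root r k : Rmat N sigma r 0 k = 0.
Proof.
  unfold Rmat. rewrite sum_to_zero; [lra|]. intros. rewrite on_path_root. reflexivity.
Qed.

Lemma Rmat_in_subtree r i k : in_nodes N k ->
  on_path N sigma i k = true -> Rmat N sigma r i k = Rmat N sigma r i i.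
Proof.
  intros Hk H. unfold Rmat. f_equal. apply sum_to_ext. intros m _.
  destruct (on_path N sigma m i) eqn:E; simpl; auto.
  rewrite (on_path_trans m i k) by auto. reflexivity.
Qed.

Lemma Rmat_out_subtree r i k : in_nodes N i ->
  on_path N sigma i k = false -> Rmat N sigma r i k = Rmat N sigma r (sigma i) k.
Proof.
  intros Hi H. unfold Rmat. f_equal. apply sum_to_ext. intros m _.
  destruct (on_path N sigma m i) eqn:E; destruct (on_path N sigma m (sigma i)) eqn:E2;
    simpl; auto.
  - apply on_path_step in E as [->|E]; auto; [rewrite H; auto|congruence].
  - assert (on_path N sigma m i = true) by (apply on_path_step; auto). congruence.
Qed.

End RadialTree.

(** It agrees with the walk distance of [is_dist], but is better suited to
    reasoning along ancestor chains. *)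

Definition meets_at (sigma : nat -> nat) (k u n : nat) : Prop :=
  exists m1 m2, (m1 + m2 = n)%nat /\ Nat.iter m1 sigma u = Nat.iter m2 sigma k /\
    (forall m', (m' < m1)%nat -> Nat.iter m' sigma u <> 0%nat) /\
    (forall m', (m' < m2)%nat -> Nat.iter m' sigma k <> 0%nat).

Definition least_such (P : nat -> Prop) (n : nat) : Prop := P n /\ forall m, P m -> (n <= m)%nat.

Definition tree_dist (sigma : nat -> nat) (k u : nat) : nat :=
  epsilon (inhabits 0%nat) (least_such (meets_at sigma k u)).

Section TreeDistance.

Variables (N : nat) (sigma : nat -> nat).
Hypothesis tree : is_radial_tree N sigma.

(** Any two nodes meet, at the latest at the root. *)
Lemma meets_exists k u : (k <= N)%nat -> (u <= N)%nat -> exists n, meets_at sigma k u n.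
Proof.
  intros Hk Hu.
  destruct (depth_exists N sigma tree u Hu) as [Mu [Eu Hu']].
  destruct (depth_exists N sigma tree k Hk) as [Mk [Ek Hk']].
  exists (Mu + Mk)%nat, Mu, Mk. repeat split; auto. congruence.
Qed.

Lemma tree_dist_spec k u : (k <= N)%nat -> (u <= N)%nat ->
  least_such (meets_at sigma k u) (tree_dist sigma k u).
Proof.
  intros Hk Hu. apply (epsilon_spec (inhabits 0%nat) (least_such (meets_at sigma k u))).
  destruct (meets_exists k u Hk Hu) as [n Hn].
  destruct (least_witness _ n Hn) as [m [Pm Hm]]. exists m. split; auto.
  intros m' Pm'. destruct (Nat.le_gt_cases m m'); auto. exfalso; eapply Hm; eauto.
Qed.

Lemma tree_dist_le k u n : (k <= N)%nat -> (u <= N)%nat ->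
  meets_at sigma k u n -> (tree_dist sigma k u <= n)%nat.
Proof. intros Hk Hu H. apply (tree_dist_spec k u Hk Hu); auto. Qed.

Lemma tree_dist_meets k u : (k <= N)%nat -> (u <= N)%nat ->
  meets_at sigma k u (tree_dist sigma k u).
Proof. intros Hk Hu. apply (tree_dist_spec k u Hk Hu). Qed.

Lemma tree_dist_self k : (k <= N)%nat -> tree_dist sigma k k = 0%nat.
Proof.
  intros Hk. assert (tree_dist sigma k k <= 0)%nat; [|lia].
  apply tree_dist_le; auto. exists 0%nat, 0%nat. repeat split; intros; lia.
Qed.

Lemma tree_dist_parent k u : (k <= N)%nat -> in_nodes N u ->
  (tree_dist sigma k u <= tree_dist sigma k (sigma u) + 1)%nat /\
  (tree_dist sigma k (sigma u) <= tree_dist sigma k u + 1)%nat.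
Proof.
  intros Hk Hu. assert (Hw : (sigma u <= N)%nat) by (apply tree; auto).
  assert (Hu' : (u <= N)%nat) by (unfold in_nodes in Hu; lia).
  split.
  - destruct (tree_dist_meets k (sigma u) Hk Hw) as [m1 [m2 [E1 [E2 [H1 H2]]]]].
    apply tree_dist_le; auto. exists (S m1), m2.
    split; [lia|]. split; [rewrite Nat.iter_succ_r; auto|]. split; [|auto].
    intros [|m'] Hm'; [simpl; unfold in_nodes in Hu; lia|].
    rewrite Nat.iter_succ_r. apply H1; lia.
  - destruct (tree_dist_meets k u Hk Hu') as [[|m1] [m2 [E1 [E2 [H1 H2]]]]].
    + (* the meeting point is u itself: continue one step up from there *)
      apply tree_dist_le; auto. simpl in E2. exists 0%nat, (S m2).
      repeat split; [lia|simpl; rewrite E2; auto|intros; lia|].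
      intros m' Hm'. destruct (Nat.eq_dec m' m2) as [->|]; [|apply H2; lia].
      rewrite <- E2. unfold in_nodes in Hu; lia.
    + apply Nat.le_trans with (m1 + m2)%nat; [|lia]. apply tree_dist_le; auto.
      exists m1, m2. repeat split; auto; rewrite <- ?Nat.iter_succ_r; auto.
      intros m' Hm'. rewrite <- Nat.iter_succ_r. apply H1; lia.
Qed.

Lemma adj_le u v : adj N sigma u v -> (u <= N)%nat /\ (v <= N)%nat.
Proof.
  intros [[Hu E]|[Hv E]]; assert (H1 := proj1 (tree _ ltac:(eassumption)));
    unfold in_nodes in *; subst; lia.
Qed.

Lemma tree_dist_le_walk i k n : (k <= N)%nat -> (i <= N)%nat ->
  is_walk N sigma i k n -> (tree_dist sigma k i <= n)%nat.
Proof.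
  intros Hk Hi [w [W0 [Wn Hw]]].
  assert (C : forall j, (j <= n)%nat ->
            (w j <= N)%nat /\ (tree_dist sigma k i <= tree_dist sigma k (w j) + j)%nat).
  { induction j as [|j IH]; intros Hj; [rewrite W0; lia|].
    destruct (IH ltac:(lia)) as [IH1 IH2]. assert (A := Hw j ltac:(lia)).
    split; [apply (adj_le _ _ A)|].
    destruct A as [[Hu E]|[Hv E]].
    - destruct (tree_dist_parent k (w j) Hk Hu) as [L1 _]. rewrite E in L1. lia.
    - destruct (tree_dist_parent k (w (S j)) Hk Hv) as [_ L2]. rewrite E in L2. lia. }
  destruct (C n ltac:(lia)) as [_ C2]. rewrite Wn, tree_dist_self in C2 by auto. lia.
Qed.

(** Two nodes are joined by a walk through the root. *)
Lemma walk_exists i k : in_nodes N i -> in_nodes N k -> exists n, is_walk N sigma i k n.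
Proof.
  intros Hi Hk.
  destruct (depth_exists N sigma tree i ltac:(unfold in_nodes in Hi; lia)) as [Mi [Ei Hi']].
  destruct (depth_exists N sigma tree k ltac:(unfold in_nodes in Hk; lia)) as [Mk [Ek Hk']].
  assert (Mk <> 0%nat) by (intro; subst; simpl in Ek; unfold in_nodes in Hk; lia).
  assert (Ni : forall m, (m < Mi)%nat -> in_nodes N (Nat.iter m sigma i))
    by (intros; apply iter_in_nodes; auto; intros; apply Hi'; lia).
  assert (Nk : forall m, (m < Mk)%nat -> in_nodes N (Nat.iter m sigma k))
    by (intros; apply iter_in_nodes; auto; intros; apply Hk'; lia).
  exists (Mi + Mk)%nat.
  exists (fun m => if Nat.leb m Mi then Nat.iter m sigma i else Nat.iter (Mi + Mk - m) sigma k).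
  split; [|split].
  - reflexivity.
  - destruct (Nat.leb_spec (Mi + Mk) Mi); [lia|].
    replace (Mi + Mk - (Mi + Mk))%nat with 0%nat by lia. reflexivity.
  - intros m Hm. destruct (Nat.leb_spec m Mi); destruct (Nat.leb_spec (S m) Mi); [| | lia|].
    + left. split; [apply Ni; lia|]. rewrite Nat.iter_succ. reflexivity.
    + assert (m = Mi) by lia. subst m. right. split; [apply Nk; lia|].
      rewrite <- Nat.iter_succ. replace (S (Mi + Mk - S Mi)) with Mk by lia. congruence.
    + right. split; [apply Nk; lia|].
      rewrite <- Nat.iter_succ. f_equal. lia.
Qed.

Lemma tree_dist_le_diameter d i k : is_diameter N sigma d ->
  in_nodes N i -> in_nodes N k -> (tree_dist sigma k i <= d)%nat.
Proof.
  intros [Hd _] Hi Hk. destruct (walk_exists i k Hi Hk) as [n Hn].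
  destruct (least_witness (is_walk N sigma i k) n Hn) as [n0 [W0 L0]].
  assert (is_dist N sigma i k n0).
  { split; auto. intros m Hm. destruct (Nat.le_gt_cases n0 m); auto.
    exfalso; eapply L0; eauto. }
  assert (n0 <= d)%nat by (apply (Hd i k n0); auto).
  assert (tree_dist sigma k i <= n0)%nat
    by (apply tree_dist_le_walk; auto; unfold in_nodes in *; lia).
  lia.
Qed.

Lemma tree_dist_child_toward k c i : in_nodes N k -> in_nodes N c -> in_nodes N i ->
  sigma c = i -> on_path N sigma c k = true ->
  (tree_dist sigma k c + 1 <= tree_dist sigma k i)%nat.
Proof.
  intros Hk Hc Hi Ec H. apply on_path_ancestor in H; auto. destruct H as [h [Eh Hh]].
  assert (Hk' : (k <= N)%nat) by (unfold in_nodes in Hk; lia).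
  assert (L1 : (tree_dist sigma k c <= h)%nat).
  { apply tree_dist_le; auto; [unfold in_nodes in Hc; lia|].
    exists 0%nat, h. repeat split; auto; intros; [lia|apply Hh; lia]. }
  destruct (tree_dist_meets k i Hk' ltac:(unfold in_nodes in Hi; lia))
    as [m1 [m2 [E1 [E2 [H1 H2]]]]].
  (* i is the (h+1)-th ancestor of k, so the meeting point of i and k sits h+1 above k *)
  assert (Es : Nat.iter (S h) sigma k = i) by (simpl; rewrite Eh; auto).
  assert (m1 + S h = m2)%nat.
  { apply (ancestor_inj N sigma tree k); auto.
    - rewrite Nat.iter_add, Es. auto.
    - intros m' Hm'. destruct (Nat.le_gt_cases m' h); [apply Hh; auto|].
      replace m' with ((m' - S h) + S h)%nat by lia. rewrite Nat.iter_add, Es.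
      apply H1. lia. }
  lia.
Qed.

Lemma tree_dist_child_away k j i : in_nodes N k -> in_nodes N j -> in_nodes N i ->
  sigma j = i -> on_path N sigma j k = false ->
  (tree_dist sigma k i + 1 <= tree_dist sigma k j)%nat.
Proof.
  intros Hk Hj Hi Ej H.
  assert (Hk' : (k <= N)%nat) by (unfold in_nodes in Hk; lia).
  destruct (tree_dist_meets k j Hk' ltac:(unfold in_nodes in Hj; lia))
    as [[|m1] [m2 [E1 [E2 [H1 H2]]]]].
  - (* meeting at j itself would put k in the subtree of j *)
    exfalso. simpl in E2. assert (on_path N sigma j k = true); [|congruence].
    apply on_path_ancestor; auto. exists m2. split; auto.
    intros m' Hm'. destruct (Nat.eq_dec m' m2) as [->|]; [|apply H2; lia].
    rewrite <- E2. unfold in_nodes in Hj; lia.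
  - assert (tree_dist sigma k i <= m1 + m2)%nat; [|lia].
    apply tree_dist_le; auto; [unfold in_nodes in Hi; lia|].
    exists m1, m2. repeat split; auto; rewrite <- Ej, <- ?Nat.iter_succ_r; auto.
    intros m' Hm'. rewrite <- Nat.iter_succ_r. apply H1; lia.
Qed.

Lemma tree_dist_pos_outside j k : in_nodes N k -> in_nodes N j ->
  on_path N sigma j k = false -> (1 <= tree_dist sigma k j)%nat.
Proof.
  intros Hk Hj H. destruct (Nat.le_gt_cases 1 (tree_dist sigma k j)); auto. exfalso.
  destruct (tree_dist_meets k j ltac:(unfold in_nodes in Hk; lia) ltac:(unfold in_nodes in Hj; lia))
    as [m1 [m2 [E1 [E2 _]]]].
  assert (m1 = 0%nat /\ m2 = 0%nat) as [-> ->] by lia. simpl in E2. subst.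
  rewrite on_path_refl in H; auto. discriminate.
Qed.

End TreeDistance.

(** The messages of DIST-OPT are linear
    combinations of dual variables taken at various past times.  Rather than tracking
    the exact delays, we bound the error against the combination taken at a single
    time [s] by the variation of each dual variable over a window before [s]. *)

Lemma at_time_nat (f : nat -> nat -> R) t k : at_time f (Z.of_nat t) k = f t k.
Proof.
  unfold at_time. destruct (Z.ltb_spec (Z.of_nat t) 0); [lia|]. rewrite Nat2Z.id. reflexivity.
Qed.

Lemma delayed_at_time (f : nat -> nat -> R) t tau j :
  delayed f t tau j = at_time f (Z.of_nat (S t) - Z.of_nat tau) j.
Proof.
  unfold delayed, at_time.
  destruct (Nat.ltb_spec (S t) tau); destruct (Z.ltb_spec (Z.of_nat (S t) - Z.of_nat tau) 0);
    try lia; auto.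
  f_equal. lia.
Qed.

Definition variation (lam : nat -> nat -> R) (k : nat) (s : Z) (B : nat) : R :=
  sum_lt B (fun m => Rabs (at_time lam (s - 1 - Z.of_nat m) k - at_time lam (s - Z.of_nat m) k)).

Definition tracks (N : nat) (lam : nat -> nat -> R) (Q : R) (w : nat -> R) (s : Z)
  (B : nat -> nat) : Prop :=
  Rabs (Q - sum_to N (fun k => w k * at_time lam s k)) <=
  sum_to N (fun k => Rabs (w k) * variation lam k s (B k)).

Lemma variation_nonneg lam k s B : 0 <= variation lam k s B.
Proof. apply sum_lt_nonneg. intros; apply Rabs_pos. Qed.

Lemma variation_mono lam k s B B' : (B <= B')%nat -> variation lam k s B <= variation lam k s B'.
Proof. intros H. apply sum_lt_mono; auto. intros; apply Rabs_pos. Qed.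

Lemma variation_telescope lam k s d :
  Rabs (at_time lam (s - Z.of_nat d) k - at_time lam s k) <= variation lam k s d.
Proof.
  induction d as [|d IH]; unfold variation in *; cbn [sum_lt].
  - replace (s - Z.of_nat 0)%Z with s by lia. rewrite Rminus_diag, Rabs_R0. lra.
  - replace (s - Z.of_nat (S d))%Z with (s - 1 - Z.of_nat d)%Z by lia.
    eapply Rle_trans; [|apply Rplus_le_compat_r, IH].
    rewrite Rplus_comm.
    replace (at_time lam (s - 1 - Z.of_nat d) k - at_time lam s k) with
      ((at_time lam (s - 1 - Z.of_nat d) k - at_time lam (s - Z.of_nat d) k)
       + (at_time lam (s - Z.of_nat d) k - at_time lam s k)) by ring.
    apply Rabs_triang.
Qed.

Lemma variation_split lam k s a B :
  variation lam k s (a + B) = variation lam k s a + variation lam k (s - Z.of_nat a) B.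
Proof.
  unfold variation. rewrite sum_lt_split. f_equal. apply sum_lt_ext. intros m _.
  replace (s - Z.of_nat a - 1 - Z.of_nat m)%Z with (s - 1 - Z.of_nat (a + m))%Z by lia.
  replace (s - Z.of_nat a - Z.of_nat m)%Z with (s - Z.of_nat (a + m))%Z by lia.
  reflexivity.
Qed.

Section Tracking.

Variables (N : nat) (lam : nat -> nat -> R).

Lemma tracks_ext Q w w' s B : (forall k, in_nodes N k -> w k = w' k) ->
  tracks N lam Q w s B -> tracks N lam Q w' s B.
Proof.
  unfold tracks. intros H G.
  rewrite (sum_to_ext N _ (fun k => w k * at_time lam s k)) by (intros; rewrite H; auto).
  rewrite (sum_to_ext N (fun k => Rabs (w' k) * _) (fun k => Rabs (w k) * variation lam k s (B k)))
    by (intros; rewrite H; auto).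
  exact G.
Qed.

Lemma tracks_weaken Q w s B B' :
  (forall k, in_nodes N k -> w k <> 0 -> (B k <= B' k)%nat) ->
  tracks N lam Q w s B -> tracks N lam Q w s B'.
Proof.
  unfold tracks. intros H G. eapply Rle_trans; [apply G|]. apply sum_to_le. intros k Hk.
  destruct (Req_dec (w k) 0) as [E|E]; [rewrite E, Rabs_R0; lra|].
  apply Rmult_le_compat_l; [apply Rabs_pos|]. apply variation_mono, H; auto.
Qed.

Lemma tracks_shift Q w s t B : (s <= t)%Z -> tracks N lam Q w s B ->
  tracks N lam Q w t (fun k => (B k + Z.to_nat (t - s))%nat).
Proof.
  unfold tracks. intros Hst G. set (a := Z.to_nat (t - s)).
  assert (Es : s = (t - Z.of_nat a)%Z) by (unfold a; lia).
  replace (Q - sum_to N (fun k => w k * at_time lam t k)) with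
    ((Q - sum_to N (fun k => w k * at_time lam s k))
     + sum_to N (fun k => w k * (at_time lam s k - at_time lam t k))).
  2: { rewrite (sum_to_ext N (fun k => w k * (at_time lam s k - at_time lam t k))
                  (fun k => w k * at_time lam s k - w k * at_time lam t k)) by (intros; ring).
       rewrite sum_to_minus. ring. }
  eapply Rle_trans; [apply Rabs_triang|].
  eapply Rle_trans; [apply Rplus_le_compat_r, G|].
  eapply Rle_trans; [apply Rplus_le_compat_l, sum_to_abs|].
  rewrite <- sum_to_plus. apply sum_to_le. intros k _.
  rewrite Nat.add_comm, variation_split, <- Es, Rabs_mult.
  assert (Rabs (at_time lam s k - at_time lam t k) <= variation lam k t a)
    by (rewrite Es; apply variation_telescope).
  assert (0 <= Rabs (w k)) by apply Rabs_pos. nra.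
Qed.

Lemma tracks_zero_state w s B : (forall k, in_nodes N k -> at_time lam s k = 0) ->
  tracks N lam 0 w s B.
Proof.
  unfold tracks. intros H. rewrite sum_to_zero by (intros; rewrite H; [ring|auto]).
  rewrite Rminus_0_r, Rabs_R0.
  apply sum_to_nonneg; intros; apply Rmult_le_pos; [apply Rabs_pos|apply variation_nonneg].
Qed.

Lemma tracks_zero_weights w s B : (forall k, in_nodes N k -> w k = 0) -> tracks N lam 0 w s B.
Proof.
  unfold tracks. intros H. rewrite sum_to_zero by (intros; rewrite H; [ring|auto]).
  rewrite Rminus_0_r, Rabs_R0.
  apply sum_to_nonneg; intros; apply Rmult_le_pos; [apply Rabs_pos|apply variation_nonneg].
Qed.

Lemma tracks_unit t i B : in_nodes N i ->
  tracks N lam (lam t i) (fun k => if Nat.eqb k i then 1 else 0) (Z.of_nat t) B.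
Proof.
  unfold tracks. intros Hi.
  rewrite (sum_to_ext N _ (fun k => if Nat.eqb k i then at_time lam (Z.of_nat t) k else 0))
    by (intros k _; destruct (Nat.eqb k i); ring).
  rewrite sum_to_delta by (unfold in_nodes in Hi; lia).
  rewrite at_time_nat, Rminus_diag, Rabs_R0.
  apply sum_to_nonneg; intros; apply Rmult_le_pos; [apply Rabs_pos|apply variation_nonneg].
Qed.

Lemma tracks_scale Q w s B c : tracks N lam Q w s B ->
  tracks N lam (c * Q) (fun k => c * w k) s B.
Proof.
  unfold tracks. intros G.
  rewrite (sum_to_ext N (fun k => c * w k * _) (fun k => c * (w k * at_time lam s k)))
    by (intros; ring).
  rewrite (sum_to_ext N (fun k => Rabs (c * w k) * _)
             (fun k => Rabs c * (Rabs (w k) * variation lam k s (B k))))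
    by (intros; rewrite Rabs_mult; ring).
  rewrite !sum_to_scal, <- Rmult_minus_distr_l, Rabs_mult.
  apply Rmult_le_compat_l; [apply Rabs_pos|exact G].
Qed.

Lemma tracks_add Q1 Q2 w1 w2 s B : tracks N lam Q1 w1 s B -> tracks N lam Q2 w2 s B ->
  (forall k, in_nodes N k -> Rabs (w1 k + w2 k) = Rabs (w1 k) + Rabs (w2 k)) ->
  tracks N lam (Q1 + Q2) (fun k => w1 k + w2 k) s B.
Proof.
  unfold tracks. intros G1 G2 H.
  replace (Q1 + Q2 - sum_to N (fun k => (w1 k + w2 k) * at_time lam s k)) with
    ((Q1 - sum_to N (fun k => w1 k * at_time lam s k))
     + (Q2 - sum_to N (fun k => w2 k * at_time lam s k))).
  2: { rewrite (sum_to_ext N (fun k => (w1 k + w2 k) * _)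
                  (fun k => w1 k * at_time lam s k + w2 k * at_time lam s k)) by (intros; ring).
       rewrite sum_to_plus. ring. }
  eapply Rle_trans; [apply Rabs_triang|].
  rewrite (sum_to_ext N (fun k => Rabs (w1 k + w2 k) * _)
             (fun k => Rabs (w1 k) * variation lam k s (B k)
                       + Rabs (w2 k) * variation lam k s (B k)))
    by (intros; rewrite H; auto; ring).
  rewrite sum_to_plus. lra.
Qed.

Lemma Rabs_add_nonneg a b : 0 <= a -> 0 <= b -> Rabs (a + b) = Rabs a + Rabs b.
Proof. intros; rewrite !Rabs_right; lra. Qed.

Lemma tracks_sum n (Q : nat -> R) (W : nat -> nat -> R) s B :
  (forall c, (1 <= c <= n)%nat -> tracks N lam (Q c) (W c) s B) ->
  (forall c k, (1 <= c <= n)%nat -> in_nodes N k -> 0 <= W c k) ->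
  tracks N lam (sum_to n Q) (fun k => sum_to n (fun c => W c k)) s B.
Proof.
  induction n as [|n IH]; intros HG HW; cbn [sum_to].
  - apply tracks_zero_weights. auto.
  - apply tracks_add.
    + apply IH; intros; [apply HG|apply HW]; auto; lia.
    + apply HG; lia.
    + intros k Hk. apply Rabs_add_nonneg; [apply sum_to_nonneg; intros|]; apply HW; auto; lia.
Qed.

Lemma tracks_delayed (F : nat -> nat -> R) j w B t tau tmax :
  (tau <= tmax)%nat -> (forall u, (u <= t)%nat -> tracks N lam (F u j) w (Z.of_nat u) B) ->
  tracks N lam (at_time F (Z.of_nat t - Z.of_nat tau) j) w (Z.of_nat t) (fun k => B k + tmax)%nat.
Proof.
  intros Ht H. set (s := (Z.of_nat t - Z.of_nat tau)%Z).
  destruct (Z.ltb_spec s 0) as [Hs|Hs].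
  - (* before time 0 both the message and the dual variables vanish *)
    unfold at_time at 1. rewrite (proj2 (Z.ltb_lt s 0)) by auto.
    eapply tracks_weaken; [|apply (tracks_shift 0 w s (Z.of_nat t) B); [lia|]].
    + intros; simpl. unfold s. lia.
    + apply tracks_zero_state. intros. unfold at_time. rewrite (proj2 (Z.ltb_lt s 0)); auto.
  - set (u := Z.to_nat s). assert (Eu : s = Z.of_nat u) by (unfold u; lia).
    rewrite Eu, at_time_nat.
    eapply tracks_weaken; [|apply (tracks_shift _ w (Z.of_nat u) (Z.of_nat t) B); [lia|apply H; lia]].
    intros; simpl. lia.
Qed.

End Tracking.

(** The message-passing layer of DIST-OPT, for one of the two channels ([P] with the
    matrix [R], or [Q] with [X]): upward messages [alpha] aggregate the dual variables
    of a subtree, downward messages [beta] carry the contribution of the rest of the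
    tree, and [z] combines them. *)
Record message_protocol (N : nat) (sigma : nat -> nat) (r : nat -> R) (tau_max : nat)
  (tau_up tau_dn : nat -> nat -> nat) (lam alpha alphah beta betah z : nat -> nat -> R)
  : Prop := {
  mp_init : forall i, in_nodes N i ->
    lam 0%nat i = 0 /\ alpha 0%nat i = 0 /\ beta 0%nat i = 0 /\
    alphah 0%nat i = 0 /\ betah 0%nat i = 0 /\ z 0%nat i = 0;
  mp_root : forall i t, in_nodes N i -> sigma i = 0%nat -> betah t i = 0;
  mp_alpha : forall t i, in_nodes N i ->
    alpha (S t) i = lam (S t) i + sum_children N sigma i (alphah t);
  mp_beta : forall t i j, in_nodes N i -> in_nodes N j -> sigma j = i ->
    beta (S t) j = Rmat N sigma r i i * (lam (S t) i + sum_children_but N sigma i j (alphah t))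
                   + betah t i;
  mp_hat : forall t i, in_nodes N i -> sigma i <> 0%nat ->
    alphah (S t) i = delayed alpha t (tau_up i t) i /\
    betah (S t) i = delayed beta t (tau_dn i t) i;
  mp_z : forall t i, in_nodes N i ->
    z (S t) i = Rmat N sigma r i i * (lam (S t) i + sum_children N sigma i (alphah (S t)))
                + betah (S t) i;
  mp_delay : forall j t, in_nodes N j -> sigma j <> 0%nat ->
    (tau_up j t <= tau_max)%nat /\ (tau_dn j t <= tau_max)%nat
}.

Arguments mp_init {N sigma r tau_max tau_up tau_dn lam alpha alphah beta betah z} _.
Arguments mp_root {N sigma r tau_max tau_up tau_dn lam alpha alphah beta betah z} _.
Arguments mp_alpha {N sigma r tau_max tau_up tau_dn lam alpha alphah beta betah z} _.
Arguments mp_beta {N sigma r tau_max tau_up tau_dn lam alpha alphah beta betah z} _.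
Arguments mp_hat {N sigma r tau_max tau_up tau_dn lam alpha alphah beta betah z} _.
Arguments mp_z {N sigma r tau_max tau_up tau_dn lam alpha alphah beta betah z} _.
Arguments mp_delay {N sigma r tau_max tau_up tau_dn lam alpha alphah beta betah z} _.

Definition children_sum (N : nat) (sigma : nat -> nat) (i : nat) (P : nat -> bool)
  (f : nat -> R) : R :=
  sum_to N (fun c => if Nat.eqb (sigma c) i && P c then f c else 0).

Lemma sum_children_all N sigma i f :
  sum_children N sigma i f = children_sum N sigma i (fun _ => true) f.
Proof. apply sum_to_ext. intros. rewrite andb_true_r. reflexivity. Qed.

Lemma children_sum_but_one N sigma i j f : in_nodes N j -> sigma j = i ->
  children_sum N sigma i (fun c => negb (Nat.eqb c j)) f = sum_children N sigma i f - f j.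
Proof.
  intros Hj Ej. unfold children_sum, sum_children.
  replace (f j) with (if Nat.eqb (sigma j) i then f j else 0)
    by (rewrite Ej, Nat.eqb_refl; reflexivity).
  rewrite <- (sum_to_delta N j (fun c => if Nat.eqb (sigma c) i then f c else 0))
    by (unfold in_nodes in Hj; lia).
  rewrite <- sum_to_minus. apply sum_to_ext. intros c _.
  destruct (Nat.eqb_spec c j) as [->|]; destruct (Nat.eqb (sigma _) i); simpl; ring.
Qed.

Definition subtree_weight (N : nat) (sigma : nat -> nat) (j k : nat) : R :=
  indicator (on_path N sigma j k).

Definition outside_weight (N : nat) (sigma : nat -> nat) (r : nat -> R) (j k : nat) : R :=
  if on_path N sigma j k then 0 else Rmat N sigma r (sigma j) k.

Lemma subtree_weight_nonneg N sigma j k : 0 <= subtree_weight N sigma j k.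
Proof. unfold subtree_weight, indicator. destruct on_path; lra. Qed.

Section MessageInvariants.

Variables (N : nat) (sigma : nat -> nat) (r : nat -> R) (tau_max : nat)
  (tau_up tau_dn : nat -> nat -> nat) (lam alpha alphah beta betah z : nat -> nat -> R).
Hypothesis tree : is_radial_tree N sigma.
Hypothesis proto : message_protocol N sigma r tau_max tau_up tau_dn lam alpha alphah beta betah z.

(** One round of communication costs at most [tau_max + 1] time steps per edge. *)
Let T := S tau_max.
Let dist := tree_dist sigma.

(** Invariants: at time [u], the upward message of [j] reflects each [lam_k] of its
    subtree with a delay of at most [T * dist(k, j)], and the downward message to [j]
    each [lam_k] outside it with a delay of at most [T * (dist(k, j) - 1)]. *)
Definition alpha_invariant (u : nat) : Prop := forall j, in_nodes N j ->
  tracks N lam (alpha u j) (subtree_weight N sigma j) (Z.of_nat u) (fun k => T * dist k j)%nat.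

Definition beta_invariant (u : nat) : Prop := forall j, in_nodes N j -> in_nodes N (sigma j) ->
  tracks N lam (beta u j) (outside_weight N sigma r j) (Z.of_nat u) (fun k => T * dist k j - T)%nat.

Lemma tracks_initial (f : nat -> nat -> R) w B j : in_nodes N j -> f 0%nat j = 0 ->
  tracks N lam (f 0%nat j) w (Z.of_nat 0) B.
Proof.
  intros Hj ->. apply tracks_zero_state. intros k Hk. rewrite at_time_nat. apply (mp_init proto); auto.
Qed.

Lemma alphah_tracks t j :
  (forall u, (u <= t)%nat -> alpha_invariant u) -> in_nodes N j -> sigma j <> 0%nat ->
  tracks N lam (alphah t j) (subtree_weight N sigma j) (Z.of_nat t)
    (fun k => T * dist k j + tau_max)%nat.
Proof.
  intros C Hj Hs. destruct t as [|t].
  - apply tracks_initial; auto. apply (mp_init proto); auto.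
  - rewrite (proj1 (mp_hat proto t j Hj Hs)), delayed_at_time.
    apply tracks_delayed; [apply (mp_delay proto j t Hj Hs)|].
    intros u Hu. apply C; auto.
Qed.

Lemma betah_tracks t j :
  (forall u, (u <= t)%nat -> beta_invariant u) -> in_nodes N j -> sigma j <> 0%nat ->
  tracks N lam (betah t j) (outside_weight N sigma r j) (Z.of_nat t)
    (fun k => T * dist k j - T + tau_max)%nat.
Proof.
  intros C Hj Hs. destruct t as [|t].
  - apply tracks_initial; auto. apply (mp_init proto); auto.
  - rewrite (proj2 (mp_hat proto t j Hj Hs)), delayed_at_time.
    apply tracks_delayed; [apply (mp_delay proto j t Hj Hs)|].
    intros u Hu. apply C; auto. apply parent_in_nodes; auto.
Qed.

Lemma children_sum_tracks P t s i B :
  (forall u, (u <= t)%nat -> alpha_invariant u) -> in_nodes N i -> (t <= s)%nat ->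
  (forall c k, in_nodes N c -> in_nodes N k -> sigma c = i -> P c = true ->
     on_path N sigma c k = true -> (T * dist k c + tau_max + (s - t) <= B k)%nat) ->
  tracks N lam (children_sum N sigma i P (alphah t))
    (fun k => children_sum N sigma i P (fun c => subtree_weight N sigma c k)) (Z.of_nat s) B.
Proof.
  intros C Hi Hts Hbudget. apply tracks_sum.
  - intros c Hc. destruct (Nat.eqb_spec (sigma c) i) as [e|]; destruct (P c) eqn:Pc; simpl;
      try (apply tracks_zero_weights; auto).
    assert (Hs : sigma c <> 0%nat) by (unfold in_nodes in Hi; lia).
    eapply tracks_weaken;
      [|apply (tracks_shift N lam _ _ (Z.of_nat t) (Z.of_nat s)); [lia|apply alphah_tracks; auto]].
    intros k Hk Hw. unfold subtree_weight, indicator in Hw.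
    destruct (on_path N sigma c k) eqn:E; [|lra].
    replace (Z.to_nat (Z.of_nat s - Z.of_nat t)) with (s - t)%nat by lia.
    apply Hbudget; auto.
  - intros c k _ _. destruct (_ && _); [apply subtree_weight_nonneg|lra].
Qed.

Lemma subtree_weights_outside P i k : in_nodes N i -> in_nodes N k ->
  on_path N sigma i k = false ->
  (if Nat.eqb k i then 1 else 0) + children_sum N sigma i P (fun c => subtree_weight N sigma c k) = 0.
Proof.
  intros Hi Hk E. destruct (Nat.eqb_spec k i) as [->|]; [rewrite on_path_refl in E; auto; discriminate|].
  unfold children_sum. rewrite sum_to_zero; [ring|]. intros c _.
  destruct (Nat.eqb_spec (sigma c) i); simpl; [|reflexivity].
  destruct (P c); [|reflexivity]. unfold subtree_weight.
  destruct (on_path N sigma c k) eqn:Ec; [|reflexivity].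
  rewrite (on_path_up N sigma tree c i k) in E; auto. discriminate.
Qed.

(** The combination [R_ii (lam_i + sum of selected upward messages) + downward message]
    formed by node [i]; it is [z_i] (all children) or the message to a child [j]
    (all children but [j]). *)
Lemma node_combination_tracks P t s i B :
  (forall u, (u <= t)%nat -> alpha_invariant u) ->
  (forall u, (u <= t)%nat -> beta_invariant u) ->
  in_nodes N i -> (t <= s)%nat ->
  (forall c k, in_nodes N c -> in_nodes N k -> sigma c = i -> P c = true ->
     on_path N sigma c k = true -> (T * dist k c + tau_max + (s - t) <= B k)%nat) ->
  (forall k, in_nodes N k -> sigma i <> 0%nat -> on_path N sigma i k = false ->
     (T * dist k i - T + tau_max + (s - t) <= B k)%nat) ->
  tracks N lam
    (Rmat N sigma r i i * (lam s i + children_sum N sigma i P (alphah t)) + betah t i)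
    (fun k => Rmat N sigma r i i *
       ((if Nat.eqb k i then 1 else 0) + children_sum N sigma i P (fun c => subtree_weight N sigma c k))
       + outside_weight N sigma r i k)
    (Z.of_nat s) B.
Proof.
  intros CA CB Hi Hts Hchild Hparent. apply tracks_add.
  - apply tracks_scale, tracks_add; [apply tracks_unit; auto|apply children_sum_tracks; auto|].
    intros k _. apply Rabs_add_nonneg; [destruct (Nat.eqb k i); lra|].
    apply sum_to_nonneg. intros c _. destruct (_ && _); [apply subtree_weight_nonneg|lra].
  - destruct (Nat.eq_dec (sigma i) 0) as [Hroot|Hs].
    + rewrite (mp_root proto) by auto. apply tracks_zero_weights.
      intros k _. unfold outside_weight. rewrite Hroot, Rmat_root. destruct on_path; reflexivity.
    + eapply tracks_weaken;
        [|apply (tracks_shift N lam _ _ (Z.of_nat t) (Z.of_nat s)); [lia|apply betah_tracks; auto]].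
      intros k Hk Hw. unfold outside_weight in Hw.
      destruct (on_path N sigma i k) eqn:E; [lra|].
      replace (Z.to_nat (Z.of_nat s - Z.of_nat t)) with (s - t)%nat by lia.
      apply Hparent; auto.
  - (* the two weights have disjoint supports: the subtree of i and its complement *)
    intros k Hk. unfold outside_weight. destruct (on_path N sigma i k) eqn:E.
    + rewrite Rplus_0_r, Rabs_R0. ring.
    + rewrite subtree_weights_outside, Rmult_0_r, Rplus_0_l, Rabs_R0 by auto. ring.
Qed.

Lemma subtree_weight_rec i k : in_nodes N i -> in_nodes N k ->
  (if Nat.eqb k i then 1 else 0) +
  children_sum N sigma i (fun _ => true) (fun c => subtree_weight N sigma c k) =
  subtree_weight N sigma i k.
Proof.
  intros Hi Hk. unfold subtree_weight at 2.
  rewrite (subtree_indicator_rec N sigma tree i k) by auto.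
  unfold indicator at 1. f_equal. apply sum_to_ext. intros. rewrite andb_true_r. reflexivity.
Qed.

Lemma Rmat_row_split i k : in_nodes N i -> in_nodes N k ->
  Rmat N sigma r i i * subtree_weight N sigma i k + outside_weight N sigma r i k =
  Rmat N sigma r i k.
Proof.
  intros Hi Hk. unfold subtree_weight, outside_weight, indicator.
  destruct (on_path N sigma i k) eqn:E.
  - rewrite (Rmat_in_subtree N sigma tree r i k) by auto. ring.
  - rewrite (Rmat_out_subtree N sigma tree r i k) by auto. ring.
Qed.

(** Inductive step for upward messages: [alpha_j] adds [lam_j] to the upward messages
    of its children, which are one edge closer to their subtrees. *)
Lemma alpha_step t :
  (forall u, (u <= t)%nat -> alpha_invariant u) -> alpha_invariant (S t).
Proof.
  intros C j Hj. rewrite (mp_alpha proto), sum_children_all by auto.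
  eapply tracks_ext; [|apply tracks_add; [apply tracks_unit; auto|
                                          apply (children_sum_tracks _ t (S t)); auto|]].
  -
    intros k Hk. apply subtree_weight_rec; auto.
  - intros c k Hc Hk Ec _ E.
    assert (D := tree_dist_child_toward N sigma tree k c j Hk Hc Hj Ec E).
    unfold dist. replace (S t - t)%nat with 1%nat by lia. unfold T in *. nia.
  - intros k _. apply Rabs_add_nonneg; [destruct (Nat.eqb k j); lra|].
    apply sum_to_nonneg. intros c _. destruct (_ && _); [apply subtree_weight_nonneg|lra].
Qed.

(** Inductive step for downward messages: the message from [i] to [j] combines [lam_i],
    the messages of the siblings of [j] and the message received by [i], all of which
    lie at least one edge farther from [j] than from [i]. *)
Lemma beta_step t :
  (forall u, (u <= t)%nat -> alpha_invariant u) ->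
  (forall u, (u <= t)%nat -> beta_invariant u) -> beta_invariant (S t).
Proof.
  intros CA CB j Hj Hi. set (i := sigma j) in *.
  rewrite (mp_beta proto t i j) by auto.
  (* nodes outside the subtree of j are outside the subtree of each sibling or of i *)
  assert (Hup : forall k, in_nodes N k -> on_path N sigma j k = true -> on_path N sigma i k = true)
    by (intros; apply (on_path_up N sigma tree j); auto).
  eapply tracks_ext;
    [|apply (node_combination_tracks (fun c => negb (Nat.eqb c j)) t (S t)); auto].
  - (* weight identity: the combination formed at i for j is the outside weight of j *)
    intros k Hk. cbv beta.
    rewrite children_sum_but_one, sum_children_all by auto.
    replace ((if Nat.eqb k i then 1 else 0) + (children_sum N sigma i (fun _ => true)
               (fun c => subtree_weight N sigma c k) - subtree_weight N sigma j k))
      with (subtree_weight N sigma i k - subtree_weight N sigma j k)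
      by (rewrite <- subtree_weight_rec by auto; ring).
    assert (Hrow := Rmat_row_split i k Hi Hk).
    unfold outside_weight, subtree_weight, indicator in *.
    destruct (on_path N sigma j k) eqn:Ej.
    + rewrite (Hup k Hk Ej) in *. lra.
    + fold i. lra.
  - intros c k Hc Hk Ec Pc E.
    apply negb_true_iff, Nat.eqb_neq in Pc.
    assert (Ej : on_path N sigma j k = false).
    { destruct (on_path N sigma j k) eqn:E2; auto. exfalso. apply Pc.
      apply (child_unique N sigma tree c j k); auto.
      rewrite Ec. unfold in_nodes in Hi; lia. }
    assert (D1 := tree_dist_child_toward N sigma tree k c i Hk Hc Hi Ec E).
    assert (D2 := tree_dist_child_away N sigma tree k j i Hk Hj Hi eq_refl Ej).
    unfold dist. replace (S t - t)%nat with 1%nat by lia. unfold T in *. nia.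
  - intros k Hk _ E.
    assert (P := tree_dist_pos_outside N sigma tree i k Hk Hi E).
    assert (Ej : on_path N sigma j k = false)
      by (destruct (on_path N sigma j k) eqn:E2; auto; rewrite (Hup k Hk E2) in E; discriminate).
    assert (D2 := tree_dist_child_away N sigma tree k j i Hk Hj Hi eq_refl Ej).
    unfold dist. replace (S t - t)%nat with 1%nat by lia. unfold T in *. nia.
Qed.

Lemma message_invariants t : forall u, (u <= t)%nat -> alpha_invariant u /\ beta_invariant u.
Proof.
  induction t as [|t IH]; intros u Hu.
  - replace u with 0%nat by lia.
    split; [intros j Hj|intros j Hj _]; apply tracks_initial; auto; apply (mp_init proto); auto.
  - destruct (Nat.eq_dec u (S t)) as [->|]; [|apply IH; lia].
    split; [apply alpha_step|apply beta_step]; intros; apply IH; auto.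
Qed.

Lemma z_tracks t i : in_nodes N i ->
  tracks N lam (z t i) (fun k => Rmat N sigma r i k) (Z.of_nat t) (fun k => T * dist k i)%nat.
Proof.
  intros Hi. destruct t as [|t]; [apply tracks_initial; auto; apply (mp_init proto); auto|].
  rewrite (mp_z proto), sum_children_all by auto.
  eapply tracks_ext; [|apply (node_combination_tracks (fun _ => true) (S t) (S t)); auto].
  - intros k Hk. cbv beta. rewrite subtree_weight_rec by auto. apply Rmat_row_split; auto.
  - intros; apply message_invariants with (t := S t); auto.
  - intros; apply message_invariants with (t := S t); auto.
  - intros c k Hc Hk Ec _ E.
    assert (D := tree_dist_child_toward N sigma tree k c i Hk Hc Hi Ec E).
    unfold dist. rewrite Nat.sub_diag. unfold T in *. nia.
  - intros k Hk _ E.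
    assert (P := tree_dist_pos_outside N sigma tree i k Hk Hi E).
    unfold dist. rewrite Nat.sub_diag. unfold T in *. nia.
Qed.

End MessageInvariants.

(** Since tree distances are bounded by the diameter [d], every [z_i(t)] tracks row [i]
    of [R] within the uniform window [t0 = d (tau_max + 1)]. *)
Lemma z_tracks_window N sigma r tau_max tau_up tau_dn lam alpha alphah beta betah z d t i :
  is_radial_tree N sigma ->
  message_protocol N sigma r tau_max tau_up tau_dn lam alpha alphah beta betah z ->
  is_diameter N sigma d -> in_nodes N i ->
  tracks N lam (z t i) (fun k => Rmat N sigma r i k) (Z.of_nat t) (fun _ => d * (tau_max + 1))%nat.
Proof.
  intros tree proto Hd Hi.
  eapply tracks_weaken; [|eapply z_tracks; eauto].
  intros k Hk _. assert (A := tree_dist_le_diameter N sigma tree d i k Hd Hi Hk). cbv beta. nia.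
Qed.

(** For fixed multipliers the Lagrangian is separable in the
    coordinates of [p] and [q], so its minimiser over the box is a coordinatewise
    clamped linear function of the multipliers; the gradient of [D] is the constraint
    violation at that minimiser. *)

Lemma clamp_in x a b : a <= b -> a <= clamp x a b <= b.
Proof. intros H. unfold clamp, Rmin, Rmax. destruct (Rle_dec x a); destruct (Rle_dec _ b); lra. Qed.

Lemma clamp_lipschitz x y a b : a <= b -> Rabs (clamp x a b - clamp y a b) <= Rabs (x - y).
Proof.
  intros H. unfold clamp, Rmin, Rmax.
  destruct (Rle_dec x a); destruct (Rle_dec y a);
    repeat match goal with |- context [Rle_dec ?u ?v] => destruct (Rle_dec u v) end;
    unfold Rabs; repeat match goal with |- context [Rcase_abs ?u] => destruct (Rcase_abs u) end;
    lra.
Qed.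

Lemma clamp_argmin a b c lo hi yh : 0 < a -> lo <= hi -> lo <= yh <= hi ->
  (forall y, lo <= y <= hi -> a/2*yh^2 + b*yh - c*yh <= a/2*y^2 + b*y - c*y) ->
  yh = clamp ((c - b)/a) lo hi.
Proof.
  intros Ha Hlh Hy H. set (u := clamp ((c - b)/a) lo hi).
  assert (Hu := clamp_in ((c-b)/a) lo hi Hlh). fold u in Hu.
  set (m := (c-b)/a). assert (Em : a * m = c - b) by (unfold m; field; lra).
  assert (Cs : (u = lo /\ m <= lo) \/ u = m \/ (u = hi /\ hi <= m)).
  { unfold u, clamp, Rmin, Rmax. fold m. destruct (Rle_dec m lo); destruct (Rle_dec _ hi); lra. }
  clearbody u m.
  (* first-order optimality of u: the derivative at u points into the interval *)
  assert (V : (a*u - (c - b)) * (yh - u) >= 0).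
  { rewrite <- Em. destruct Cs as [[-> Hm]|[->|[-> Hm]]].
    - replace (a*lo - a*m) with (a*(lo - m)) by ring.
      assert (0 <= a*(lo-m)) by (apply Rmult_le_pos; lra).
      assert (0 <= a*(lo-m)*(yh-lo)) by (apply Rmult_le_pos; lra). lra.
    - lra.
    - replace (a*hi - a*m) with (- (a*(m - hi))) by ring.
      assert (0 <= a*(m-hi)) by (apply Rmult_le_pos; lra).
      assert (0 <= a*(m-hi)*(hi-yh)) by (apply Rmult_le_pos; lra). nra. }
  (* exact second-order expansion of the objective around u *)
  assert (Q : a/2*u^2 + b*u - c*u + a/2*(yh-u)^2 + (a*u - (c-b))*(yh-u)
              = a/2*yh^2 + b*yh - c*yh) by field.
  assert (H1 := H u Hu). assert (0 <= (yh - u)^2) by apply pow2_ge_0.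
  assert ((yh-u)^2 = 0) by nra. assert (yh - u = 0) by nra. lra.
Qed.

Definition upd (p : nat -> R) (i : nat) (y : R) : nat -> R :=
  fun k => if Nat.eqb k i then y else p k.

Lemma in_box_upd N lo hi p i y : in_box N lo hi p -> lo i <= y <= hi i ->
  in_box N lo hi (upd p i y).
Proof. intros Hp Hy k Hk. unfold upd. destruct (Nat.eqb_spec k i); subst; auto. Qed.

Lemma lagrangian_swap N Rm Xm v0 vlo vhi aP bP cP aQ bQ cQ llo lhi p q :
  lagrangian N Rm Xm v0 vlo vhi aP bP cP aQ bQ cQ llo lhi p q =
  lagrangian N Xm Rm v0 vlo vhi aQ bQ cQ aP bP cP llo lhi q p.
Proof.
  assert (E : forall k, volt N Rm Xm v0 p q k = volt N Xm Rm v0 q p k)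
    by (intros; unfold volt; ring).
  unfold lagrangian.
  rewrite (sum_to_ext N (fun i => llo i * _) (fun i => llo i * (vlo i - volt N Xm Rm v0 q p i)))
    by (intros; rewrite E; auto).
  rewrite (sum_to_ext N (fun i => lhi i * _) (fun i => lhi i * (volt N Xm Rm v0 q p i - vhi i)))
    by (intros; rewrite E; auto).
  ring.
Qed.

Lemma lagrangian_upd N Rm Xm v0 vlo vhi aP bP cP aQ bQ cQ llo lhi p q i y : in_nodes N i ->
  lagrangian N Rm Xm v0 vlo vhi aP bP cP aQ bQ cQ llo lhi (upd p i y) q -
  lagrangian N Rm Xm v0 vlo vhi aP bP cP aQ bQ cQ llo lhi p q =
  ((aP i / 2 * y ^ 2 + bP i * y) - (aP i / 2 * p i ^ 2 + bP i * p i)) -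
  (y - p i) * sum_to N (fun k => Rm k i * (llo k - lhi k)).
Proof.
  intros Hi. assert (Hi' : (1 <= i <= N)%nat) by exact Hi.
  assert (Hv : forall k, volt N Rm Xm v0 (upd p i y) q k = volt N Rm Xm v0 p q k + Rm k i * (y - p i)).
  { intros k. unfold volt, matvec, upd.
    rewrite (sum_to_update N i (fun j z => Rm k j * z) p y) by auto. ring. }
  assert (Hq : quad_cost N aP bP cP (upd p i y) = quad_cost N aP bP cP p +
            ((aP i / 2 * y ^ 2 + bP i * y) - (aP i / 2 * p i ^ 2 + bP i * p i))).
  { unfold quad_cost, upd.
    rewrite (sum_to_update N i (fun k z => aP k / 2 * z ^ 2 + bP k * z + cP k) p y) by auto.
    ring. }
  unfold lagrangian. rewrite Hq.
  rewrite (sum_to_ext N (fun k => llo k * (vlo k - volt N Rm Xm v0 (upd p i y) q k))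
     (fun k => llo k * (vlo k - volt N Rm Xm v0 p q k) - (y - p i) * (Rm k i * llo k)))
    by (intros; rewrite Hv; ring).
  rewrite (sum_to_ext N (fun k => lhi k * (volt N Rm Xm v0 (upd p i y) q k - vhi k))
     (fun k => lhi k * (volt N Rm Xm v0 p q k - vhi k) + (y - p i) * (Rm k i * lhi k)))
    by (intros; rewrite Hv; ring).
  rewrite (sum_to_ext N (fun k => Rm k i * (llo k - lhi k)) (fun k => Rm k i * llo k - Rm k i * lhi k))
    by (intros; ring).
  rewrite sum_to_minus, sum_to_plus, !sum_to_minus, !sum_to_scal. ring.
Qed.

Lemma lagrangian_minimizer N Rm Xm v0 vlo vhi plo phi aP bP cP aQ bQ cQ llo lhi ph qh i :
  in_nodes N i -> 0 < aP i -> plo i <= phi i -> in_box N plo phi ph ->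
  (forall p, in_box N plo phi p ->
     lagrangian N Rm Xm v0 vlo vhi aP bP cP aQ bQ cQ llo lhi ph qh <=
     lagrangian N Rm Xm v0 vlo vhi aP bP cP aQ bQ cQ llo lhi p qh) ->
  ph i = clamp ((sum_to N (fun k => Rm k i * (llo k - lhi k)) - bP i) / aP i) (plo i) (phi i).
Proof.
  intros Hi Ha Hlh Hph Hmin. apply clamp_argmin; auto.
  intros y Hy. assert (M := Hmin (upd ph i y) (in_box_upd N plo phi ph i y Hph Hy)).
  assert (E := lagrangian_upd N Rm Xm v0 vlo vhi aP bP cP aQ bQ cQ llo lhi ph qh i y Hi).
  lra.
Qed.

Lemma lagrangian_affine N Rm Xm v0 vlo vhi aP bP cP aQ bQ cQ llo lhi mlo mhi p q :
  lagrangian N Rm Xm v0 vlo vhi aP bP cP aQ bQ cQ mlo mhi p q -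
  lagrangian N Rm Xm v0 vlo vhi aP bP cP aQ bQ cQ llo lhi p q =
  sum_to N (fun k => (vlo k - volt N Rm Xm v0 p q k) * (mlo k - llo k)
                     + (volt N Rm Xm v0 p q k - vhi k) * (mhi k - lhi k)).
Proof.
  unfold lagrangian.
  rewrite (sum_to_ext N (fun k => (vlo k - volt N Rm Xm v0 p q k) * (mlo k - llo k)
                     + (volt N Rm Xm v0 p q k - vhi k) * (mhi k - lhi k))
    (fun k => (mlo k * (vlo k - volt N Rm Xm v0 p q k) - llo k * (vlo k - volt N Rm Xm v0 p q k))
              + (mhi k * (volt N Rm Xm v0 p q k - vhi k) - lhi k * (volt N Rm Xm v0 p q k - vhi k))))
    by (intros; ring).
  rewrite sum_to_plus, !sum_to_minus. ring.
Qed.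

Lemma is_gradient_swap N F llo lhi Glo Ghi :
  is_gradient N F llo lhi Glo Ghi -> is_gradient N (fun a b => F b a) lhi llo Ghi Glo.
Proof.
  intros HG eps He. destruct (HG eps He) as [del [Hd Hm]]. exists del. split; auto.
  assert (Sym : forall a b, vnorm2 N a b = vnorm2 N b a)
    by (intros; unfold vnorm2; f_equal; apply sum_to_ext; intros; ring).
  intros mhi mlo Hn. rewrite Sym in Hn |- *.
  rewrite (sum_to_ext N _ (fun i => Glo i * (mlo i - llo i) + Ghi i * (mhi i - lhi i)))
    by (intros; ring).
  apply Hm. exact Hn.
Qed.

Lemma le_all_pos_eq0 x : (forall eps, 0 < eps -> Rabs x <= eps) -> x = 0.
Proof.
  intros H. destruct (Req_dec x 0); auto. exfalso.
  assert (0 < Rabs x) by (apply Rabs_pos_lt; auto).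
  assert (Rabs x <= Rabs x / 2) by (apply H; lra). lra.
Qed.

Lemma small_both_signs (x eps del : R) : 0 < del ->
  (forall h, Rabs h < del -> h * x <= eps * Rabs h) -> Rabs x <= eps.
Proof.
  intros Hd K.
  assert (K1 := K (del/2) ltac:(rewrite Rabs_right; lra)).
  assert (K2 := K (-(del/2)) ltac:(rewrite Rabs_left; lra)).
  rewrite Rabs_right in K1 by lra. rewrite Rabs_left in K2 by lra.
  apply Rabs_le. split.
  - assert (- x <= eps); [|lra]. apply (Rmult_le_reg_l (del/2)); lra.
  - apply (Rmult_le_reg_l (del/2)); lra.
Qed.

(** The first block of the gradient: compare both along coordinate perturbations. *)
Lemma gradient_eq_supergradient_lo N F llo lhi Glo Ghi glo ghi :
  is_gradient N F llo lhi Glo Ghi ->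
  (forall mlo mhi, F mlo mhi - F llo lhi <=
     sum_to N (fun k => glo k * (mlo k - llo k) + ghi k * (mhi k - lhi k))) ->
  forall i, in_nodes N i -> Glo i = glo i.
Proof.
  intros HG Hsup i Hi. assert (Hi' : (1 <= i <= N)%nat) by exact Hi.
  set (bump h := fun k => llo k + (if Nat.eqb k i then h else 0)).
  assert (Hdot : forall (G1 G2 : nat -> R) h,
            sum_to N (fun k => G1 k * (bump h k - llo k) + G2 k * (lhi k - lhi k)) = h * G1 i).
  { intros G1 G2 h. unfold bump.
    rewrite (sum_to_ext N _ (fun k => if Nat.eqb k i then G1 k * h else 0))
      by (intros k _; destruct (Nat.eqb k i); ring).
    rewrite (sum_to_delta N i (fun k => G1 k * h)) by auto. ring. }
  assert (Hnorm : forall h, vnorm2 N (fun k => bump h k - llo k) (fun k => lhi k - lhi k) = Rabs h).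
  { intros h. unfold vnorm2, bump.
    rewrite (sum_to_ext N _ (fun k => if Nat.eqb k i then h ^ 2 else 0))
      by (intros k _; destruct (Nat.eqb k i); ring).
    rewrite (sum_to_delta N i (fun _ => h ^ 2)) by auto.
    rewrite <- Rsqr_pow2. apply sqrt_Rsqr_abs. }
  assert (Glo i - glo i = 0); [|lra]. apply le_all_pos_eq0. intros eps He.
  destruct (HG eps He) as [del [Hd Hm]]. apply (small_both_signs _ _ del Hd).
  intros h Hh. assert (M := Hm (bump h) lhi). rewrite Hnorm, Hdot in M.
  specialize (M Hh). assert (S := Hsup (bump h) lhi). rewrite Hdot in S.
  assert (Rmaj := Rle_abs (- (F (bump h) lhi - F llo lhi - h * Glo i))).
  rewrite Rabs_Ropp in Rmaj. lra.
Qed.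

(** Both blocks, the second one by exchanging the blocks. *)
Lemma gradient_eq_supergradient N F llo lhi Glo Ghi glo ghi :
  is_gradient N F llo lhi Glo Ghi ->
  (forall mlo mhi, F mlo mhi - F llo lhi <=
     sum_to N (fun k => glo k * (mlo k - llo k) + ghi k * (mhi k - lhi k))) ->
  forall i, in_nodes N i -> Glo i = glo i /\ Ghi i = ghi i.
Proof.
  intros HG Hsup i Hi. split.
  - exact (gradient_eq_supergradient_lo N F llo lhi Glo Ghi glo ghi HG Hsup i Hi).
  - apply (gradient_eq_supergradient_lo N (fun a b => F b a) lhi llo Ghi Glo ghi glo);
      [apply is_gradient_swap; auto| |auto].
    intros mhi mlo. eapply Rle_trans; [apply Hsup|].
    right. apply sum_to_ext. intros; ring.
Qed.

Lemma run_protocols {N sigma r x v0 vlo vhi plo phi qlo qhi aP bP aQ bQ gamma tau_max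
  tau_up tau_dn p q zP zQ llo lhi lam alpha betaP betaQ alphah betaPh betaQh} :
  (forall j t, in_nodes N j -> sigma j <> 0%nat ->
     (tau_up j t <= tau_max)%nat /\ (tau_dn j t <= tau_max)%nat) ->
  dist_opt_run N sigma (Rmat N sigma r) (Rmat N sigma x) v0
    vlo vhi plo phi qlo qhi aP bP aQ bQ gamma tau_up tau_dn
    p q zP zQ llo lhi lam alpha betaP betaQ alphah betaPh betaQh ->
  message_protocol N sigma r tau_max tau_up tau_dn lam alpha alphah betaP betaPh zP /\
  message_protocol N sigma x tau_max tau_up tau_dn lam alpha alphah betaQ betaQh zQ.
Proof.
  intros Htau [Hinit [Hroot Hstep]].
  split; constructor.
  all: try (intros i Hi; destruct (Hinit i Hi) as (?&?&?&?&?&?&?&?&?&?&?); tauto).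
  all: try (intros i t Hi Hs; destruct (Hroot i t Hi Hs); assumption).
  all: try (intros t i j Hi Hj Ej; apply (Hstep t i Hi); assumption).
  all: try (intros t i Hi Hs; destruct (Hstep t i Hi) as (_&_&_&_&_&_&_&H&_);
            destruct (H Hs) as (?&?&?); split; assumption).
  all: try (intros t i Hi; apply (Hstep t i Hi)).
  all: exact Htau.
Qed.

(** In DIST-OPT, [lam = llo - lhi] at all times (including negative ones, where all vanish). *)
Lemma run_lam {N sigma Rm Xm v0 vlo vhi plo phi qlo qhi aP bP aQ bQ gamma tau_up tau_dn
  p q zP zQ llo lhi lam alpha betaP betaQ alphah betaPh betaQh} :
  dist_opt_run N sigma Rm Xm v0 vlo vhi plo phi qlo qhi aP bP aQ bQ gamma tau_up tau_dn
    p q zP zQ llo lhi lam alpha betaP betaQ alphah betaPh betaQh ->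
  forall s k, in_nodes N k -> at_time lam s k = at_time llo s k - at_time lhi s k.
Proof.
  intros [Hinit [_ Hstep]] s k Hk. unfold at_time. destruct (s <? 0)%Z; [ring|].
  destruct (Z.to_nat s) as [|n].
  - destruct (Hinit k Hk) as (_&_&Hlo&Hhi&Hl&_). rewrite Hlo, Hhi, Hl. ring.
  - apply (Hstep n k Hk).
Qed.

Lemma run_primal {N sigma Rm Xm v0 vlo vhi plo phi qlo qhi aP bP aQ bQ gamma tau_up tau_dn
  p q zP zQ llo lhi lam alpha betaP betaQ alphah betaPh betaQh} t {i} :
  dist_opt_run N sigma Rm Xm v0 vlo vhi plo phi qlo qhi aP bP aQ bQ gamma tau_up tau_dn
    p q zP zQ llo lhi lam alpha betaP betaQ alphah betaPh betaQh -> in_nodes N i ->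
  p t i = clamp ((zP t i - bP i) / aP i) (plo i) (phi i) /\
  q t i = clamp ((zQ t i - bQ i) / aQ i) (qlo i) (qhi i).
Proof. intros [_ [_ Hstep]] Hi. destruct (Hstep t i Hi) as (Hp & Hq & _). auto. Qed.

Lemma dual_gradient {N Rm Xm v0 vlo vhi plo phi qlo qhi aP bP cP aQ bQ cQ D llo lhi Glo Ghi} :
  (forall i, in_nodes N i -> plo i <= phi i /\ qlo i <= qhi i) ->
  (forall i, in_nodes N i -> 0 < aP i /\ 0 < aQ i) ->
  is_dual_function N Rm Xm v0 vlo vhi plo phi qlo qhi aP bP cP aQ bQ cQ D ->
  is_gradient N D llo lhi Glo Ghi ->
  exists ph qh,
    (forall i, in_nodes N i ->
       ph i = clamp ((sum_to N (fun k => Rm k i * (llo k - lhi k)) - bP i) / aP i) (plo i) (phi i) /\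
       qh i = clamp ((sum_to N (fun k => Xm k i * (llo k - lhi k)) - bQ i) / aQ i) (qlo i) (qhi i)) /\
    (forall i, in_nodes N i ->
       Glo i = vlo i - volt N Rm Xm v0 ph qh i /\ Ghi i = volt N Rm Xm v0 ph qh i - vhi i).
Proof.
  intros Hbox Hapos Hdual Hgrad.
  destruct (Hdual llo lhi) as [[ph [qh [Hph [Hqh HD]]]] Hmin].
  exists ph, qh. split.
  - intros i Hi. destruct (Hbox i Hi). destruct (Hapos i Hi). split.
    + apply (lagrangian_minimizer N Rm Xm v0 vlo vhi plo phi aP bP cP aQ bQ cQ llo lhi ph qh);
        auto. intros p' Hp'. rewrite <- HD. apply Hmin; auto.
    + (* the q-coordinates, by exchanging the roles of p and q *)
      apply (lagrangian_minimizer N Xm Rm v0 vlo vhi qlo qhi aQ bQ cQ aP bP cP llo lhi qh ph);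
        auto. intros q' Hq'.
        rewrite <- (lagrangian_swap N Rm Xm v0 vlo vhi aP bP cP aQ bQ cQ llo lhi ph qh),
          <- (lagrangian_swap N Rm Xm v0 vlo vhi aP bP cP aQ bQ cQ llo lhi ph q'), <- HD.
        apply Hmin; auto.
  - apply (gradient_eq_supergradient N D llo lhi Glo Ghi
             (fun k => vlo k - volt N Rm Xm v0 ph qh k) (fun k => volt N Rm Xm v0 ph qh k - vhi k));
      auto.
    intros mlo mhi. destruct (Hdual mlo mhi) as [_ Hm]. specialize (Hm ph qh Hph Hqh).
    rewrite HD, <- (lagrangian_affine N Rm Xm v0 vlo vhi aP bP cP aQ bQ cQ llo lhi mlo mhi ph qh).
    lra.
Qed.

Definition window_steps (N : nat) (lam : nat -> nat -> R) (s : Z) (B : nat) : R :=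
  sum_lt B (fun m => sqrt (sum_to N (fun k =>
    (at_time lam (s - 1 - Z.of_nat m) k - at_time lam (s - Z.of_nat m) k) ^ 2))).

Lemma window_steps_nonneg N lam s B : 0 <= window_steps N lam s B.
Proof. apply sum_lt_nonneg. intros; apply sqrt_pos. Qed.

Lemma tracking_error_le_window N lam (w : nat -> R) M s B :
  sqrt (sum_to N (fun k => w k ^ 2)) <= M ->
  sum_to N (fun k => Rabs (w k) * variation lam k s B) <= M * window_steps N lam s B.
Proof.
  intros HM. unfold variation, window_steps.
  rewrite (sum_to_ext N _ (fun k => sum_lt B (fun m => Rabs (w k) *
             Rabs (at_time lam (s - 1 - Z.of_nat m) k - at_time lam (s - Z.of_nat m) k))))
    by (intros; rewrite sum_lt_scal; auto).
  rewrite sum_exchange, <- sum_lt_scal. apply sum_lt_le. intros m _.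
  eapply Rle_trans; [apply cauchy_schwarz|].
  apply Rmult_le_compat_r; [apply sqrt_pos|exact HM].
Qed.

Lemma clamp_deviation (z c b a lo hi amin M : R) : 0 < amin -> amin <= a -> lo <= hi ->
  Rabs (z - c) <= M -> Rabs (clamp ((z - b) / a) lo hi - clamp ((c - b) / a) lo hi) <= M / amin.
Proof.
  intros Ham Ha Hlh H. eapply Rle_trans; [apply clamp_lipschitz; auto|].
  replace ((z - b) / a - (c - b) / a) with ((z - c) / a) by (field; lra).
  assert (0 <= M) by (eapply Rle_trans; [apply Rabs_pos|eauto]).
  unfold Rdiv. rewrite Rabs_mult, (Rabs_right (/ a)) by (apply Rle_ge, Rlt_le, Rinv_0_lt_compat; lra).
  assert (/ a <= / amin) by (apply Rinv_le_contravar; lra).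
  assert (0 < / a) by (apply Rinv_0_lt_compat; lra).
  assert (Rabs (z - c) * / a <= M * / a) by (apply Rmult_le_compat_r; lra).
  assert (M * / a <= M * / amin) by (apply Rmult_le_compat_l; lra). lra.
Qed.

Lemma primal_deviation N sigma rr lam llo lhi z t B i a b lo hi amin M :
  (forall k, in_nodes N k -> lam t k = llo t k - lhi t k) ->
  tracks N lam z (fun k => Rmat N sigma rr i k) (Z.of_nat t) (fun _ => B) ->
  is_spectral_norm N (Rmat N sigma rr) M -> in_nodes N i ->
  0 < amin -> amin <= a -> lo <= hi ->
  Rabs (clamp ((z - b) / a) lo hi -
        clamp ((sum_to N (fun k => Rmat N sigma rr k i * (llo t k - lhi t k)) - b) / a) lo hi)
  <= M * window_steps N lam (Z.of_nat t) B / amin.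
Proof.
  intros Hlam Htr HM Hi Ham Ha Hlh. apply clamp_deviation; auto.
  rewrite (sum_to_ext N _ (fun k => Rmat N sigma rr i k * at_time lam (Z.of_nat t) k))
    by (intros k Hk; rewrite at_time_nat, Hlam, Rmat_sym; auto).
  eapply Rle_trans; [apply Htr|]. apply tracking_error_le_window.
  apply (row_norm_le_spectral N _ M i HM); auto. apply Rmat_sym.
Qed.

Lemma window_steps_le N lam llo lhi t B :
  (forall s k, in_nodes N k -> at_time lam s k = at_time llo s k - at_time lhi s k) ->
  window_steps N lam (Z.of_nat t) B <= sqrt 2 *
    sum_lt B (fun k => let s := (Z.of_nat t - 1 - Z.of_nat k)%Z in
       vnorm2 N (fun i => at_time llo s i - at_time llo (s + 1) i)
                (fun i => at_time lhi s i - at_time lhi (s + 1) i)).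
Proof.
  intros Hlam. unfold window_steps. rewrite <- sum_lt_scal. apply sum_lt_le. intros m _.
  cbv zeta. replace (Z.of_nat t - 1 - Z.of_nat m + 1)%Z with (Z.of_nat t - Z.of_nat m)%Z by lia.
  eapply Rle_trans; [|apply vnorm_diff_le_vnorm2]. right. f_equal.
  apply sum_to_ext. intros k Hk. rewrite !Hlam by auto. f_equal. ring.
Qed.

(** From coordinatewise primal deviations to the gradient error:
    [||grad D - g|| = sqrt 2 ||R dp + X dq|| <= sqrt 2 sqrt N (||R|| MP + ||X|| MQ)]. *)
Lemma gradient_error_bound N Rm Xm v0 vlo vhi p q ph qh Glo Ghi normR normX MP MQ :
  is_spectral_norm N Rm normR -> is_spectral_norm N Xm normX ->
  (forall i, in_nodes N i ->
     Glo i = vlo i - volt N Rm Xm v0 ph qh i /\ Ghi i = volt N Rm Xm v0 ph qh i - vhi i) ->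
  (forall i, in_nodes N i -> Rabs (p i - ph i) <= MP) ->
  (forall i, in_nodes N i -> Rabs (q i - qh i) <= MQ) ->
  vnorm2 N (fun i => Glo i - (vlo i - volt N Rm Xm v0 p q i))
           (fun i => Ghi i - (volt N Rm Xm v0 p q i - vhi i))
  <= sqrt 2 * (normR * (sqrt (INR N) * MP) + normX * (sqrt (INR N) * MQ)).
Proof.
  intros HnR HnX HG HdP HdQ.
  set (dP := fun k => p k - ph k). set (dQ := fun k => q k - qh k).
  assert (Hv : vnorm2 N (fun i => Glo i - (vlo i - volt N Rm Xm v0 p q i))
                        (fun i => Ghi i - (volt N Rm Xm v0 p q i - vhi i)) =
               sqrt 2 * vnorm N (fun i => matvec N Rm dP i + matvec N Xm dQ i)).
  { unfold vnorm2, vnorm. rewrite <- sqrt_mult_alt by lra. f_equal. rewrite <- sum_to_scal.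
    apply sum_to_ext. intros i Hi. destruct (HG i Hi) as [-> ->].
    assert (E : volt N Rm Xm v0 p q i - volt N Rm Xm v0 ph qh i =
                matvec N Rm dP i + matvec N Xm dQ i).
    { unfold volt, matvec, dP, dQ.
      rewrite (sum_to_ext N (fun j => Rm i j * (p j - ph j)) (fun j => Rm i j * p j - Rm i j * ph j))
        by (intros; ring).
      rewrite (sum_to_ext N (fun j => Xm i j * (q j - qh j)) (fun j => Xm i j * q j - Xm i j * qh j))
        by (intros; ring).
      rewrite !sum_to_minus. ring. }
    rewrite <- E. ring. }
  rewrite Hv. apply Rmult_le_compat_l; [apply sqrt_pos|].
  eapply Rle_trans; [apply vnorm_triangle|].
  assert (B1 := spectral_norm_bound N _ _ dP HnR). assert (B2 := spectral_norm_bound N _ _ dQ HnX).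
  assert (B3 : vnorm N dP <= sqrt (INR N) * MP) by (apply vnorm_le_const; auto).
  assert (B4 : vnorm N dQ <= sqrt (INR N) * MQ) by (apply vnorm_le_const; auto).
  assert (normR * vnorm N dP <= normR * (sqrt (INR N) * MP))
    by (apply Rmult_le_compat_l; [eapply spectral_norm_nonneg|]; eauto).
  assert (normX * vnorm N dQ <= normX * (sqrt (INR N) * MQ))
    by (apply Rmult_le_compat_l; [eapply spectral_norm_nonneg|]; eauto).
  lra.
Qed.

Lemma amin_pos N aP aQ amin : (forall i, in_nodes N i -> 0 < aP i /\ 0 < aQ i) ->
  is_amin N aP aQ amin -> 0 < amin.
Proof. intros Hapos [_ [i0 [Hi0 Hae]]]. destruct (Hapos i0 Hi0). destruct Hae; subst; lra. Qed.

Lemma constant_bound normR normX amin n W S :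
  0 < amin -> 0 <= n -> 0 <= W -> W <= sqrt 2 * S ->
  sqrt 2 * (normR * (n * (normR * W / amin)) + normX * (n * (normX * W / amin)))
  <= 2 * (normR ^ 2 + normX ^ 2) / amin * n * S.
Proof.
  intros Ham Hn HW HWS.
  assert (Hs2 : sqrt 2 * sqrt 2 = 2) by (apply sqrt_sqrt; lra).
  assert (Hs2p : 0 <= sqrt 2) by apply sqrt_pos.
  assert (Hc : 0 <= (normR ^ 2 + normX ^ 2) * n / amin)
    by (apply Rmult_le_pos; [apply Rmult_le_pos; nra|apply Rlt_le, Rinv_0_lt_compat; lra]).
  replace (sqrt 2 * (normR * (n * (normR * W / amin)) + normX * (n * (normX * W / amin))))
    with ((normR ^ 2 + normX ^ 2) * n / amin * (sqrt 2 * W)) by (field; lra).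
  replace (2 * (normR ^ 2 + normX ^ 2) / amin * n * S)
    with ((normR ^ 2 + normX ^ 2) * n / amin * (sqrt 2 * (sqrt 2 * S))).
  2: { replace (sqrt 2 * (sqrt 2 * S)) with (2 * S) by (rewrite <- Rmult_assoc, Hs2; ring).
       field; lra. }
  apply Rmult_le_compat_l; [exact Hc|]. apply Rmult_le_compat_l; auto.
Qed.

Theorem lemma3
  (N : nat) (sigma : nat -> nat) (r x : nat -> R) (v0 : R)
  (vlo vhi plo phi qlo qhi aP bP cP aQ bQ cQ : nat -> R) (gamma : R)
  (tau_max : nat) (tau_up tau_dn : nat -> nat -> nat)
  (p q zP zQ llo lhi lam alpha betaP betaQ alphah betaPh betaQh : nat -> nat -> R)
  (D : (nat -> R) -> (nat -> R) -> R) (d : nat) (amin normR normX : R) :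
  is_radial_tree N sigma ->
  (forall k, in_nodes N k -> 0 <= r k /\ 0 <= x k) ->
  (forall i, in_nodes N i -> vlo i <= vhi i /\ plo i <= phi i /\ qlo i <= qhi i) ->
  (forall i, in_nodes N i -> 0 < aP i /\ 0 < aQ i) ->
  0 < gamma ->
  (forall j t, in_nodes N j -> sigma j <> 0%nat ->
     (tau_up j t <= tau_max)%nat /\ (tau_dn j t <= tau_max)%nat) ->
  dist_opt_run N sigma (Rmat N sigma r) (Rmat N sigma x) v0
    vlo vhi plo phi qlo qhi aP bP aQ bQ gamma tau_up tau_dn
    p q zP zQ llo lhi lam alpha betaP betaQ alphah betaPh betaQh ->
  is_dual_function N (Rmat N sigma r) (Rmat N sigma x) v0
    vlo vhi plo phi qlo qhi aP bP cP aQ bQ cQ D ->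
  is_diameter N sigma d ->
  is_amin N aP aQ amin ->
  is_spectral_norm N (Rmat N sigma r) normR ->
  is_spectral_norm N (Rmat N sigma x) normX ->
  forall (t : nat) (Glo Ghi : nat -> R),
    is_gradient N D (llo t) (lhi t) Glo Ghi ->
    let v := volt N (Rmat N sigma r) (Rmat N sigma x) v0 (p t) (q t) in
    let t0 := (d * (tau_max + 1))%nat in
    let L := 2 * (normR ^ 2 + normX ^ 2) / amin in
    vnorm2 N (fun i => Glo i - (vlo i - v i)) (fun i => Ghi i - (v i - vhi i))
    <= L * sqrt (INR N) *
       sum_lt t0 (fun k =>
         let s := (Z.of_nat t - 1 - Z.of_nat k)%Z in
         vnorm2 N (fun i => at_time llo s i - at_time llo (s + 1) i)
                  (fun i => at_time lhi s i - at_time lhi (s + 1) i)).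
Proof.
  intros tree _ Hbox Hapos _ Htau Hrun Hdual Hdiam Hamin HnR HnX t Glo Ghi Hgrad v t0 L.
  destruct (run_protocols Htau Hrun) as [protoP protoQ].
  assert (Hlam := run_lam Hrun).
  assert (Hlam_t : forall k, in_nodes N k -> lam t k = llo t k - lhi t k)
    by (intros k Hk; rewrite <- !at_time_nat; auto).
  assert (Ham := amin_pos N aP aQ amin Hapos Hamin). destruct Hamin as [Hale _].
  assert (Hbox' : forall i, in_nodes N i -> plo i <= phi i /\ qlo i <= qhi i)
    by (intros i Hi; destruct (Hbox i Hi) as (_ & ? & ?); auto).
  destruct (dual_gradient Hbox' Hapos Hdual Hgrad) as (ph & qh & Hresp & HG).
  set (W := window_steps N lam (Z.of_nat t) t0).
  assert (HdP : forall i, in_nodes N i -> Rabs (p t i - ph i) <= normR * W / amin).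
  { intros i Hi. destruct (run_primal t Hrun Hi) as [-> _]. rewrite (proj1 (Hresp i Hi)).
    apply (primal_deviation N sigma r lam llo lhi); try apply Hale; try apply Hbox; auto.
    eapply z_tracks_window; eauto. }
  assert (HdQ : forall i, in_nodes N i -> Rabs (q t i - qh i) <= normX * W / amin).
  { intros i Hi. destruct (run_primal t Hrun Hi) as [_ ->]. rewrite (proj2 (Hresp i Hi)).
    apply (primal_deviation N sigma x lam llo lhi); try apply Hale; try apply Hbox; auto.
    eapply z_tracks_window; eauto. }
  eapply Rle_trans; [apply (gradient_error_bound N _ _ v0 vlo vhi (p t) (q t) ph qh); eauto|].
  apply constant_bound; unfold W; auto using sqrt_pos, window_steps_nonneg, window_steps_le.
Qed.
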